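(* Let $H$ be a real Hilbert space, $f:H\to\mathbb{R}\cup\{+\infty\}$ a proper lower semicontinuous paraconcave function and $\bar x\in\operatorname{dom}f$ with $0\in\partial_pf(\bar x)$. Suppose $f$ is continuous at $\bar x$ and twice epi-differentiable (in the sense of Mosco) at $\bar x$ relative to $0$, that $\operatorname{qri}\big(N_M(\operatorname{gph}\partial_pf,(\bar x,0))\big)\ne\emptyset$, and that $\operatorname{Proj}_zN_M(\operatorname{gph}\partial_pf,(\bar x,0))=H$. Then the second-order optimality conditions of the first, second and third kinds at $\bar x$ are mutually equivalent.
   Context: $S_H$ is the unit sphere of $H$; weak convergence is denoted $\stackrel{w}{\to}$. Proximal subdifferential: $\zeta\in\partial_p f(x)$ iff there exist $\sigma,\delta>0$ with $f(y)\ge f(x)+\langle\zeta,y-x\rangle-\frac{\sigma}{2}\|y-x\|^2$ whenever $\|y-x\|<\delta$. $\Delta_2 f(\bar x,p,t,u):=\frac{f(\bar x+tu)-f(\bar x)-t\langle p,u\rangle}{\frac12t^2}$, $f''_-(\bar x,p,h):=\liminf_{h'\to h,\,t\downarrow0}\Delta_2f(\bar x,p,t,h')$. Mixed contingent cone: $(h,z)\in T_M(\operatorname{gph}\partial_pf,(\bar x,p))$ iff there exist $t_n\to0^+$, $h_n\to h$ in norm, $z_n\stackrel{w}{\to}z$ with $p+t_nz_n\in\partial_pf(\bar x+t_nh_n)$ for all $n$. $D^2_Mf(\bar x,p)(h):=\{z:(h,z)\in T_M(\operatorname{gph}\partial_pf,(\bar x,p))\}$. $N_M(\operatorname{gph}\partial_pf,(\bar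 x,p)):=\{(a,b):\langle a,h\rangle+\langle b,z\rangle\le0\ \forall(h,z)\in T_M(\operatorname{gph}\partial_pf,(\bar x,p))\}$; $\partial^2_Mf(\bar x,p)(h):=\{z:(z,-h)\in N_M(\operatorname{gph}\partial_pf,(\bar x,p))\}$. $\operatorname{Proj}_zS:=\{z:\exists h,(h,z)\in S\}$. For a set-valued map $G$, $\operatorname{dom}G=\{h:G(h)\ne\emptyset\}$. $\operatorname{qri}A:=\{x\in A:\overline{\operatorname{cone}}(A-x)\text{ is a linear subspace}\}$. Second-order optimality conditions at $\bar x$: first kind: $\exists\beta>0$ with $f''_-(\bar x,0,h)\ge\beta$ for all $h\in S_H$; second kind: $\exists\beta>0$ such that for every $h\in\operatorname{dom}D^2_Mf(\bar x,0)\cap S_H$ there is $z\in D^2_Mf(\bar x,0)(h)$ with $\langle z,h\rangle\ge\beta$; third kind: $\exists\beta>0$ with $\langle z,h\rangle\ge\beta$ for all $h\in S_H\cap\operatorname{dom}\partial^2_Mf(\bar x,0)$, $z\in\partial^2_Mf(\bar x,0)(h)$. $f$ is paraconcave if $f-\frac1{2\lambda}\|\cdot\|^2$ is concave for some $\lambda>0$. Twice epi-differentiability (Mosco sense) at $\bar x$ relative to $p$: there is a proper function $\phi$ such that for every $t_n\to0^+$ the epigraphs of $\Delta_2f(\bar x,p,t_n,\cdot)$ Mosco converge to $\operatorname{epi}\phi$, where $C_n\to C$ in the Mosco sense means $C$ equals both the set of norm limits of sequences $x_n\in C_n$ and the set of weak limits of subsequences $x_{n_k}\in C_{n_k}$.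 *)

From Stdlib Require Import Reals Lra Classical.
Open Scope R_scope.
Set Implicit Arguments.

Record HilbertSpace := {
  hcarrier :> Type;
  hzero : hcarrier;
  hadd : hcarrier -> hcarrier -> hcarrier;
  hopp : hcarrier -> hcarrier;
  hscal : R -> hcarrier -> hcarrier;
  hinner : hcarrier -> hcarrier -> R;
  hadd_assoc : forall x y z, hadd x (hadd y z) = hadd (hadd x y) z;
  hadd_comm : forall x y, hadd x y = hadd y x;
  hadd_zero : forall x, hadd hzero x = x;
  hadd_opp : forall x, hadd x (hopp x) = hzero;
  hscal_assoc : forall a b x, hscal a (hscal b x) = hscal (a * b) x;
  hscal_one : forall x, hscal 1 x = x;
  hscal_distr_r : forall a b x, hscal (a + b) x = hadd (hscal a x) (hscal b x);
  hscal_distr_l : forall a x y, hscal a (hadd x y) = hadd (hscal a x) (hscal a y);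
  hinner_sym : forall x y, hinner x y = hinner y x;
  hinner_add : forall x y z, hinner (hadd x y) z = hinner x z + hinner y z;
  hinner_scal : forall a x y, hinner (hscal a x) y = a * hinner x y;
  hinner_pos : forall x, 0 <= hinner x x;
  hinner_def : forall x, hinner x x = 0 -> x = hzero;
  hcomplete : forall u : nat -> hcarrier,
    (forall eps, 0 < eps -> exists N, forall m n, (N <= m)%nat -> (N <= n)%nat ->
        sqrt (hinner (hadd (u m) (hopp (u n))) (hadd (u m) (hopp (u n)))) < eps) ->
    exists l, Un_cv (fun n => sqrt (hinner (hadd (u n) (hopp l)) (hadd (u n) (hopp l)))) 0
}.

Arguments hzero {h}.
Arguments hadd {h}.
Arguments hopp {h}.
Arguments hscal {h}.
Arguments hinner {h}.

Section HS.
Context {H : HilbertSpace}.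

Definition hsub (x y : H) : H := hadd x (hopp y).
Definition hnorm (x : H) : R := sqrt (hinner x x).

Definition unit_sphere (h : H) : Prop := hnorm h = 1.

Definition norm_cv (u : nat -> H) (l : H) : Prop :=
  Un_cv (fun n => hnorm (hsub (u n) l)) 0.
Definition weak_cv (u : nat -> H) (l : H) : Prop :=
  forall v : H, Un_cv (fun n => hinner (u n) v) (hinner l v).

Inductive ereal := Fin (r : R) | PInf.

Definition ere_le (a b : ereal) : Prop :=
  match a, b with
  | _, PInf => True
  | PInf, Fin _ => False
  | Fin x, Fin y => x <= y
  end.
Definition ere_lt (a b : ereal) : Prop :=
  match a, b with
  | Fin _, PInf => True
  | PInf, _ => False
  | Fin x, Fin y => x < y
  end.

Definition in_dom (f : H -> ereal) (x : H) : Prop := exists r, f x = Fin r.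

Definition proper (f : H -> ereal) : Prop := exists x, in_dom f x.

Definition lsc (f : H -> ereal) : Prop :=
  forall x r, ere_lt (Fin r) (f x) ->
    exists delta, 0 < delta /\
      forall y, hnorm (hsub y x) < delta -> ere_lt (Fin r) (f y).

Definition continuous_at (f : H -> ereal) (x : H) : Prop :=
  exists fx, f x = Fin fx /\
    forall eps, 0 < eps -> exists delta, 0 < delta /\
      forall y, hnorm (hsub y x) < delta ->
        exists fy, f y = Fin fy /\ Rabs (fy - fx) < eps.

(* f is paraconcave: f - (1/(2 lambda)) ||.||^2 is concave for some lambda > 0;
   concavity of g : H -> R ∪ {+oo} means its hypograph
   {(x, r) | r <= g x} is convex. *)
Definition paraconcave (f : H -> ereal) : Prop :=
  exists lambda, 0 < lambda /\
    forall x y t r s, 0 <= t <= 1 ->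
      ere_le (Fin (r + (hnorm x)^2 / (2 * lambda))) (f x) ->
      ere_le (Fin (s + (hnorm y)^2 / (2 * lambda))) (f y) ->
      let z := hadd (hscal t x) (hscal (1 - t) y) in
      ere_le (Fin (t * r + (1 - t) * s + (hnorm z)^2 / (2 * lambda))) (f z).

Definition prox_subdiff (f : H -> ereal) (x zeta : H) : Prop :=
  exists fx, f x = Fin fx /\
  exists sigma delta, 0 < sigma /\ 0 < delta /\
    forall y, hnorm (hsub y x) < delta ->
      ere_le (Fin (fx + hinner zeta (hsub y x) - sigma / 2 * (hnorm (hsub y x))^2)) (f y).

(* second-order difference quotient Delta_2 f (xbar, p, t, u);
   only meaningful for xbar in dom f (returns +oo otherwise). *)
Definition Delta2 (f : H -> ereal) (xbar p : H) (t : R) (u : H) : ereal :=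
  match f xbar, f (hadd xbar (hscal t u)) with
  | Fin fx, Fin fy => Fin ((fy - fx - t * hinner p u) / (/2 * t ^ 2))
  | _, _ => PInf
  end.

(* "beta <= f''_-(xbar, p, h)", where
   f''_-(xbar,p,h) = liminf_{h' -> h, t -> 0+} Delta2 f (xbar,p,t,h');
   unfolded definition of  beta <= liminf. *)
Definition sec_subderiv_ge (f : H -> ereal) (xbar p h : H) (beta : R) : Prop :=
  forall r, r < beta -> exists delta, 0 < delta /\
    forall t h', 0 < t < delta -> hnorm (hsub h' h) < delta ->
      ere_le (Fin r) (Delta2 f xbar p t h').

Definition T_M (f : H -> ereal) (xbar p : H) (h z : H) : Prop :=
  exists (t : nat -> R) (hn zn : nat -> H),
    (forall n, 0 < t n) /\ Un_cv t 0 /\ norm_cv hn h /\ weak_cv zn z /\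
    forall n, prox_subdiff f (hadd xbar (hscal (t n) (hn n)))
                              (hadd p (hscal (t n) (zn n))).

Definition D2M (f : H -> ereal) (xbar p h z : H) : Prop := T_M f xbar p h z.

Definition N_M (f : H -> ereal) (xbar p : H) (a b : H) : Prop :=
  forall h z, T_M f xbar p h z -> hinner a h + hinner b z <= 0.

Definition d2M (f : H -> ereal) (xbar p h z : H) : Prop :=
  N_M f xbar p z (hopp h).

Definition pnorm (a b : H) : R := sqrt ((hnorm a)^2 + (hnorm b)^2).

Definition cone_shift (A : H -> H -> Prop) (x1 x2 : H) (u1 u2 : H) : Prop :=
  exists lam y1 y2, 0 <= lam /\ A y1 y2 /\
    u1 = hscal lam (hsub y1 x1) /\ u2 = hscal lam (hsub y2 x2).

Definition closure2 (C : H -> H -> Prop) (u1 u2 : H) : Prop :=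
  forall eps, 0 < eps -> exists v1 v2, C v1 v2 /\ pnorm (hsub v1 u1) (hsub v2 u2) < eps.

Definition is_subspace2 (C : H -> H -> Prop) : Prop :=
  C hzero hzero /\
  (forall u1 u2 v1 v2, C u1 u2 -> C v1 v2 -> C (hadd u1 v1) (hadd u2 v2)) /\
  (forall lam u1 u2, C u1 u2 -> C (hscal lam u1) (hscal lam u2)).

Definition qri2 (A : H -> H -> Prop) (x1 x2 : H) : Prop :=
  A x1 x2 /\ is_subspace2 (closure2 (cone_shift A x1 x2)).

Definition mosco_cv (C : nat -> H -> R -> Prop) (L : H -> R -> Prop) : Prop :=
  (forall x r, L x r <->
     exists (xn : nat -> H) (rn : nat -> R),
       (forall n, C n (xn n) (rn n)) /\ norm_cv xn x /\ Un_cv rn r) /\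
  (forall x r, L x r <->
     exists (nk : nat -> nat) (xk : nat -> H) (rk : nat -> R),
       (forall k, (nk k < nk (S k))%nat) /\
       (forall k, C (nk k) (xk k) (rk k)) /\ weak_cv xk x /\ Un_cv rk r).

Definition epi (g : H -> ereal) (x : H) (r : R) : Prop := ere_le (g x) (Fin r).

Definition twice_epi_diff_mosco (f : H -> ereal) (xbar p : H) : Prop :=
  exists phi : H -> ereal, proper phi /\
    forall t : nat -> R, (forall n, 0 < t n) -> Un_cv t 0 ->
      mosco_cv (fun n => epi (Delta2 f xbar p (t n))) (epi phi).

Definition SOC_first (f : H -> ereal) (xbar : H) : Prop :=
  exists beta, 0 < beta /\
    forall h, unit_sphere h -> sec_subderiv_ge f xbar hzero h beta.

Definition SOC_second (f : H -> ereal) (xbar : H) : Prop :=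
  exists beta, 0 < beta /\
    forall h, (exists z, D2M f xbar hzero h z) -> unit_sphere h ->
      exists z, D2M f xbar hzero h z /\ beta <= hinner z h.

Definition SOC_third (f : H -> ereal) (xbar : H) : Prop :=
  exists beta, 0 < beta /\
    forall h z, unit_sphere h -> (exists z', d2M f xbar hzero h z') ->
      d2M f xbar hzero h z -> beta <= hinner z h.

End HS.

(* Paraconcavity and continuity at [xbar] make [f] finite and semiconcave everywhere, so every
   proximal subgradient of [f] is a global quadratic upper support. The rescaled second-order
   quotients [dq2 t u] are then uniformly semiconcave and locally bounded, which upgrades their
   Mosco limit [phi] to a continuous limit: [dq2 (t n) (hn n) -> phi h] whenever [hn n -> h].
   Thus the first-kind condition says [phi >= beta] on the unit sphere.
   For [(h, z)] in the mixed contingent cone, the upper supports at the points [xbar + t_n h_n]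
   give [s^2 phi h <= phi h + 2 (s - 1) <z, h> + (s - 1)^2 |h|^2 / lambda] for all [s > 0],
   hence [<z, h> = phi h]. Proximal points are dense by the Borwein-Preiss variational principle,
   and rescaled proximal points near [xbar + t h] have bounded slopes, so by weak sequential
   compactness every direction lies in the domain of [D2M]. The second-kind condition is
   therefore again [phi >= beta] on the sphere, and so is the third-kind one, because the
   projection hypothesis makes [d2M f xbar 0 h] nonempty and every [z] in it satisfies
   [<z, h> = phi h]. *)

From Stdlib Require Import Reals Lra Lia Classical ClassicalEpsilon FunctionalExtensionality.
Open Scope R_scope.

Arguments hadd_assoc {h}. Arguments hadd_comm {h}. Arguments hadd_zero {h}. Arguments hadd_opp {h}.
Arguments hscal_assoc {h}. Arguments hscal_one {h}. Arguments hscal_distr_r {h}.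
Arguments hscal_distr_l {h}. Arguments hinner_sym {h}. Arguments hinner_add {h}.
Arguments hinner_scal {h}. Arguments hinner_pos {h}. Arguments hinner_def {h}.
Arguments hcomplete {h}.

Section HilbertAlgebra.
Context {H : HilbertSpace}.
Implicit Types x y z u v w : H.

Lemma hadd_zero_r x : hadd x hzero = x.
Proof. rewrite hadd_comm. apply hadd_zero. Qed.

Lemma hinner_add_r x y z : hinner x (hadd y z) = hinner x y + hinner x z.
Proof. rewrite !(hinner_sym x). apply hinner_add. Qed.

Lemma hinner_scal_r a x y : hinner x (hscal a y) = a * hinner x y.
Proof. rewrite !(hinner_sym x). apply hinner_scal. Qed.

Lemma hinner_zero_l x : hinner hzero x = 0.
Proof. pose proof (hinner_add hzero hzero x) as E. rewrite hadd_zero in E. lra. Qed.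

Lemma hinner_zero_r x : hinner x hzero = 0.
Proof. rewrite hinner_sym. apply hinner_zero_l. Qed.

Lemma hinner_opp_l x y : hinner (hopp x) y = - hinner x y.
Proof. pose proof (hinner_add x (hopp x) y) as E. rewrite hadd_opp, hinner_zero_l in E. lra. Qed.

Lemma hinner_opp_r x y : hinner x (hopp y) = - hinner x y.
Proof. rewrite hinner_sym, hinner_opp_l, hinner_sym. reflexivity. Qed.

Lemma eq_of_hinner_sub_eq0 u v : hinner (hsub u v) (hsub u v) = 0 -> u = v.
Proof.
  intro E. apply hinner_def in E. unfold hsub in E.
  assert (E2 : hadd (hadd u (hopp v)) v = hadd hzero v) by (rewrite E; reflexivity).
  rewrite <- hadd_assoc, (hadd_comm (hopp v)), hadd_opp, hadd_zero_r, hadd_zero in E2.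
  exact E2.
Qed.

End HilbertAlgebra.

Global Hint Rewrite @hinner_add @hinner_add_r @hinner_scal @hinner_scal_r
  @hinner_zero_l @hinner_zero_r @hinner_opp_l @hinner_opp_r : hinner.

(* Orient every [hinner b a] like an occurrence of [hinner a b] so that [ring] sees one atom. *)
Ltac hinner_sym_normalize := repeat match goal with
  | |- context [hinner ?a ?b] => match goal with
      | |- context [hinner b a] => progress rewrite (hinner_sym b a)
      end
  end.

(* Vector identities are checked by expanding the squared norm of the difference. *)
Ltac vec_eq :=
  apply eq_of_hinner_sub_eq0; unfold hsub; autorewrite with hinner;
  hinner_sym_normalize; first [ring | field].

Section HilbertNorm.
Context {H : HilbertSpace}.
Implicit Types x y z u v w : H.

Lemma hnorm_ge0 x : 0 <= hnorm x.
Proof. apply sqrt_pos. Qed.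

Lemma hnorm_mul_self x : hnorm x * hnorm x = hinner x x.
Proof. apply sqrt_sqrt, hinner_pos. Qed.

Lemma hnorm_sq x : hnorm x ^ 2 = hinner x x.
Proof. rewrite <- hnorm_mul_self. ring. Qed.

Lemma hnorm_le_of_sq x c : 0 <= c -> hinner x x <= c * c -> hnorm x <= c.
Proof.
  intros Hc Hx. unfold hnorm. rewrite <- (sqrt_square c Hc). apply sqrt_le_1_alt. exact Hx.
Qed.

Lemma hnorm_zero : hnorm (@hzero H) = 0.
Proof. unfold hnorm. rewrite hinner_zero_l. apply sqrt_0. Qed.

Lemma hnorm_sub_self x : hnorm (hsub x x) = 0.
Proof. replace (hsub x x) with (@hzero H) by vec_eq. apply hnorm_zero. Qed.

Lemma hinner_sq_le x y : hinner x y ^ 2 <= hinner x x * hinner y y.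
Proof.
  destruct (Req_dec (hinner y y) 0) as [Hy|Hy].
  - apply hinner_def in Hy. subst y. rewrite !hinner_zero_r. lra.
  - pose proof (hinner_pos y). pose proof (hinner_pos x).
    set (t := hinner x y / hinner y y).
    pose proof (hinner_pos (hadd x (hscal (- t) y))) as P.
    autorewrite with hinner in P. rewrite (hinner_sym y x) in P.
    replace (hinner x x + - t * hinner x y + (- t * hinner x y + - t * (- t * hinner y y)))
      with ((hinner x x * hinner y y - hinner x y ^ 2) / hinner y y) in P
      by (unfold t; field; exact Hy).
    assert (0 <= hinner x x * hinner y y - hinner x y ^ 2); [|lra].
    replace (hinner x x * hinner y y - hinner x y ^ 2)
      with ((hinner x x * hinner y y - hinner x y ^ 2) / hinner y y * hinner y y)
      by (field; exact Hy).
    apply Rmult_le_pos; lra.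
Qed.

Lemma cauchy_schwarz x y : Rabs (hinner x y) <= hnorm x * hnorm y.
Proof.
  rewrite <- sqrt_Rsqr_abs. unfold hnorm. rewrite <- sqrt_mult_alt by apply hinner_pos.
  apply sqrt_le_1_alt. rewrite Rsqr_pow2. apply hinner_sq_le.
Qed.

Lemma hinner_le x y : hinner x y <= hnorm x * hnorm y.
Proof. pose proof (cauchy_schwarz x y). pose proof (Rle_abs (hinner x y)). lra. Qed.

Lemma hnorm_triangle x y : hnorm (hadd x y) <= hnorm x + hnorm y.
Proof.
  apply hnorm_le_of_sq; [pose proof (hnorm_ge0 x); pose proof (hnorm_ge0 y); lra|].
  autorewrite with hinner. rewrite (hinner_sym y x). pose proof (hinner_le x y).
  rewrite <- (hnorm_mul_self x), <- (hnorm_mul_self y). nra.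
Qed.

Lemma hnorm_scal a x : hnorm (hscal a x) = Rabs a * hnorm x.
Proof.
  unfold hnorm. autorewrite with hinner.
  rewrite <- Rmult_assoc, <- (sqrt_square (Rabs a)) by apply Rabs_pos.
  rewrite <- sqrt_mult_alt by (apply Rmult_le_pos; apply Rabs_pos).
  f_equal. rewrite <- Rabs_mult, Rabs_right; [ring|]. apply Rle_ge, Rle_0_sqr.
Qed.

Lemma hnorm_opp x : hnorm (hopp x) = hnorm x.
Proof. unfold hnorm. autorewrite with hinner. f_equal; ring. Qed.

Lemma hnorm_sub_sym x y : hnorm (hsub x y) = hnorm (hsub y x).
Proof. unfold hnorm, hsub. autorewrite with hinner. hinner_sym_normalize. f_equal; ring. Qed.

Lemma hnorm_sub_triangle x y z : hnorm (hsub x z) <= hnorm (hsub x y) + hnorm (hsub y z).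
Proof. replace (hsub x z) with (hadd (hsub x y) (hsub y z)) by vec_eq. apply hnorm_triangle. Qed.

Lemma hnorm_sub_le x y : hnorm x <= hnorm (hsub x y) + hnorm y.
Proof. replace x with (hadd (hsub x y) y) at 1 by vec_eq. apply hnorm_triangle. Qed.

End HilbertNorm.

Lemma Rle_of_le_add_small a b c θ0 :
  0 < θ0 -> (forall θ, 0 < θ < θ0 -> a <= b + θ * c) -> a <= b.
Proof.
  intros H0 Hall. destruct (Rle_dec a b) as [|Hn]; [assumption|]. exfalso.
  assert (Hc : 0 < c).
  { destruct (Rlt_dec 0 c) as [|Hc]; [assumption|].
    assert (a <= b + θ0 / 2 * c) by (apply Hall; lra). nra. }
  set (θ := Rmin (θ0 / 2) ((a - b) / (2 * c))).
  assert (Hθ1 : θ <= θ0 / 2) by apply Rmin_l.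
  assert (Hθ2 : θ <= (a - b) / (2 * c)) by apply Rmin_r.
  assert (Hθp : 0 < θ) by (apply Rmin_pos; [lra| apply Rdiv_lt_0_compat; lra]).
  specialize (Hall θ ltac:(lra)).
  apply (Rmult_le_compat_r c) in Hθ2; [|lra].
  replace ((a - b) / (2 * c) * c) with ((a - b) / 2) in Hθ2 by (field; lra).
  lra.
Qed.

Lemma Rabs_le_between a b : Rabs a <= b -> - b <= a <= b.
Proof. intro H. pose proof (Rle_abs a). pose proof (Rle_abs (- a)). rewrite Rabs_Ropp in *. lra. Qed.

Lemma Rle_of_forall_lt a b : (forall r, r < a -> r <= b) -> a <= b.
Proof.
  intro Hall. destruct (Rle_dec a b) as [|Hn]; auto. specialize (Hall ((a + b) / 2) ltac:(lra)). lra.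
Qed.

(* Differentiating [s^2 p <= p + 2 (s - 1) q + (s - 1)^2 c] at its equality case [s = 1]. *)
Lemma eq_of_scaled_le p q c :
  (forall s, 0 < s -> s ^ 2 * p <= p + 2 * (s - 1) * q + (s - 1) ^ 2 * c) -> q = p.
Proof.
  intro Key. apply Rle_antisym.
  - apply (Rle_of_le_add_small _ _ ((c - p) / 2) 1); [lra|]. intros η [H0 H1].
    specialize (Key (1 - η) ltac:(lra)). apply (Rmult_le_reg_l (2 * η)); [lra|]. nra.
  - apply (Rle_of_le_add_small _ _ ((c - p) / 2) 1); [lra|]. intros η [H0 H1].
    specialize (Key (1 + η) ltac:(lra)). apply (Rmult_le_reg_l (2 * η)); [lra|]. nra.
Qed.

Lemma eq0_of_quadratic_ge0 a b : 0 <= b -> (forall s, 0 <= s * a + s ^ 2 * b) -> a = 0.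
Proof.
  intros Hb Hall. destruct (Req_dec a 0) as [|Ha]; auto. exfalso.
  specialize (Hall (- a / (2 * b + 1))).
  replace (- a / (2 * b + 1) * a + (- a / (2 * b + 1)) ^ 2 * b)
    with (- (a * a) * (b + 1) / ((2 * b + 1) * (2 * b + 1))) in Hall by (field; lra).
  assert (0 < a * a) by (apply Rsqr_pos_lt in Ha; exact Ha).
  assert (0 < a * a * (b + 1) / ((2 * b + 1) * (2 * b + 1))) by (apply Rdiv_lt_0_compat; nra).
  lra.
Qed.

Lemma inf_approx {T : Type} (B : T -> Prop) (Phi : T -> R) m x :
  (forall y, B y -> m <= Phi y) -> B x ->
  exists s, (forall w, B w -> s <= Phi w) /\ forall eps, 0 < eps -> exists w, B w /\ Phi w < s + eps.
Proof.
  intros Hm Bx.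
  set (E := fun r => exists w, B w /\ r = - Phi w).
  assert (Hb : bound E) by (exists (- m); intros r [w [Bw ->]]; specialize (Hm w Bw); lra).
  destruct (completeness E Hb (ex_intro _ _ (ex_intro _ x (conj Bx eq_refl)))) as [s [Hs1 Hs2]].
  exists (- s). split.
  - intros w Bw. assert (- Phi w <= s) by (apply Hs1; exists w; auto). lra.
  - intros eps He. apply NNPP. intro Hn. assert (s <= s - eps); [|lra].
    apply Hs2. intros r [w [Bw ->]]. apply Rnot_lt_le. intro Hlt. apply Hn. exists w. split; auto. lra.
Qed.

Definition eventually (P : nat -> Prop) : Prop := exists N, forall n, (N <= n)%nat -> P n.

Lemma eventually_and (P Q : nat -> Prop) :
  eventually P -> eventually Q -> eventually (fun n => P n /\ Q n).
Proof. intros [N1 H1] [N2 H2]. exists (N1 + N2)%nat. intros n Hn. split; [apply H1|apply H2]; lia. Qed.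

Lemma not_eventually (P : nat -> Prop) :
  ~ eventually P -> exists g : nat -> nat, forall N, (N <= g N)%nat /\ ~ P (g N).
Proof.
  intro Hn. apply (choice (fun N n => (N <= n)%nat /\ ~ P n)). intro N.
  apply NNPP. intro Hc. apply Hn. exists N. intros n Hge.
  apply NNPP. intro HP. apply Hc. exists n. auto.
Qed.

Lemma Un_cv_eventually (u : nat -> R) l :
  Un_cv u l -> forall eps, 0 < eps -> eventually (fun n => l - eps < u n < l + eps).
Proof.
  intros Hu eps He. destruct (Hu eps He) as [N HN]. exists N. intros n Hn.
  specialize (HN n Hn). unfold Rdist in HN. apply Rabs_def2 in HN. lra.
Qed.

Lemma Un_cv_of_eventually (u : nat -> R) l :
  (forall eps, 0 < eps -> eventually (fun n => l - eps < u n < l + eps)) -> Un_cv u l.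
Proof.
  intros Hu eps He. destruct (Hu eps He) as [N HN]. exists N. intros n Hn.
  specialize (HN n Hn). unfold Rdist. apply Rabs_def1; lra.
Qed.

Lemma Un_cv_const c : Un_cv (fun _ => c) c.
Proof. apply Un_cv_of_eventually. intros eps He. exists O. intros; lra. Qed.

Lemma Un_cv_scal (u : nat -> R) l c : Un_cv u l -> Un_cv (fun n => c * u n) (c * l).
Proof. intro Hu. apply CV_mult; [apply Un_cv_const | exact Hu]. Qed.

Lemma Un_cv_ge_of_eventually (u : nat -> R) l r :
  Un_cv u l -> eventually (fun n => r <= u n) -> r <= l.
Proof.
  intros Hu Hr. destruct (Rle_dec r l) as [|Hn]; auto. exfalso.
  destruct (eventually_and _ _ (Un_cv_eventually u l Hu (r - l) ltac:(lra)) Hr) as [M HM].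
  destruct (HM M (le_n M)). lra.
Qed.

Lemma Un_cv_squeeze0 (u c d : nat -> R) :
  (forall n, d n <= u n <= c n) -> Un_cv c 0 -> Un_cv d 0 -> Un_cv u 0.
Proof.
  intros Hb Hc Hd. apply Un_cv_of_eventually. intros eps He.
  destruct (eventually_and _ _ (Un_cv_eventually c 0 Hc eps He) (Un_cv_eventually d 0 Hd eps He))
    as [N HN].
  exists N. intros n Hn. destruct (HN n Hn). specialize (Hb n). lra.
Qed.

Lemma Un_cv_reindex (u : nat -> R) l (g : nat -> nat) :
  Un_cv u l -> (forall N, (N <= g N)%nat) -> Un_cv (fun n => u (g n)) l.
Proof.
  intros Hu Hg eps He. destruct (Hu eps He) as [N HN]. exists N. intros n Hn. apply HN.
  specialize (Hg n). lia.
Qed.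

Definition inv_succ (n : nat) : R := / INR (S n).

Lemma inv_succ_pos n : 0 < inv_succ n.
Proof. apply Rinv_0_lt_compat, lt_0_INR. lia. Qed.

Lemma inv_succ_le1 n : inv_succ n <= 1.
Proof.
  unfold inv_succ. rewrite <- Rinv_1. apply Rinv_le_contravar; [lra|].
  rewrite S_INR. pose proof (pos_INR n). lra.
Qed.

Lemma inv_succ_cv0 : Un_cv inv_succ 0.
Proof.
  intros eps He. destruct (archimed_cor1 eps He) as [N [HN HN0]]. exists N. intros n Hn.
  unfold Rdist. rewrite Rminus_0_r, Rabs_right by (left; apply inv_succ_pos).
  eapply Rle_lt_trans; [|exact HN]. apply Rinv_le_contravar; [apply lt_0_INR; lia|].
  apply le_INR. lia.
Qed.

Lemma half_pow_cv0 c : Un_cv (fun k => c * (/ 2) ^ k) 0.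
Proof.
  replace (fun k => c * (/ 2) ^ k) with (fun k => c / 2 ^ k).
  - apply cv_pow_half.
  - apply functional_extensionality. intro k. unfold Rdiv. rewrite pow_inv. reflexivity.
Qed.

Lemma half_pow_le k n : (k <= n)%nat -> (/ 2) ^ n <= (/ 2) ^ k.
Proof.
  intro Hkn. replace n with (k + (n - k))%nat by lia. rewrite pow_add.
  pose proof (pow_le (/ 2) k ltac:(lra)).
  assert ((/ 2) ^ (n - k) <= 1) by (rewrite <- (pow1 (n - k)); apply pow_incr; lra).
  nra.
Qed.

Section NormConvergence.
Context {H : HilbertSpace}.

Lemma norm_cv_eventually (u : nat -> H) l :
  norm_cv u l -> forall eps, 0 < eps -> eventually (fun n => hnorm (hsub (u n) l) < eps).
Proof.
  intros Hu eps He. destruct (Un_cv_eventually _ _ Hu eps He) as [N HN]. exists N.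
  intros n Hn. specialize (HN n Hn). lra.
Qed.

Lemma norm_cv_of_eventually (u : nat -> H) l :
  (forall eps, 0 < eps -> eventually (fun n => hnorm (hsub (u n) l) < eps)) -> norm_cv u l.
Proof.
  intro Hu. apply Un_cv_of_eventually. intros eps He. destruct (Hu eps He) as [N HN].
  exists N. intros n Hn. specialize (HN n Hn). pose proof (hnorm_ge0 (hsub (u n) l)). lra.
Qed.

Lemma norm_cv_reindex (u : nat -> H) l (g : nat -> nat) :
  norm_cv u l -> (forall N, (N <= g N)%nat) -> norm_cv (fun n => u (g n)) l.
Proof. intros Hu Hg. exact (Un_cv_reindex _ _ g Hu Hg). Qed.

Lemma norm_cv_const (h : H) : norm_cv (fun _ => h) h.
Proof.
  apply norm_cv_of_eventually. intros eps He. exists O. intros n _.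
  rewrite hnorm_sub_self. exact He.
Qed.

Lemma norm_cv_lin (u v : nat -> H) a b lu lv :
  norm_cv u lu -> norm_cv v lv ->
  norm_cv (fun n => hadd (hscal a (u n)) (hscal b (v n))) (hadd (hscal a lu) (hscal b lv)).
Proof.
  intros Hu Hv. apply norm_cv_of_eventually. intros eps He.
  pose proof (Rabs_pos a). pose proof (Rabs_pos b).
  set (e := eps / (Rabs a + Rabs b + 1)).
  assert (He' : 0 < e) by (apply Rdiv_lt_0_compat; lra).
  assert (Hae : (Rabs a + Rabs b) * e < eps).
  { unfold e. apply (Rmult_lt_reg_r (Rabs a + Rabs b + 1)); [lra|].
    replace ((Rabs a + Rabs b) * (eps / (Rabs a + Rabs b + 1)) * (Rabs a + Rabs b + 1))
      with ((Rabs a + Rabs b) * eps) by (field; lra).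
    nra. }
  destruct (eventually_and _ _ (norm_cv_eventually _ _ Hu e He') (norm_cv_eventually _ _ Hv e He'))
    as [N HN].
  exists N. intros n Hn. destruct (HN n Hn) as [A B].
  replace (hsub (hadd (hscal a (u n)) (hscal b (v n))) (hadd (hscal a lu) (hscal b lv)))
    with (hadd (hscal a (hsub (u n) lu)) (hscal b (hsub (v n) lv))) by vec_eq.
  eapply Rle_lt_trans; [apply hnorm_triangle|]. rewrite !hnorm_scal.
  assert (Rabs a * hnorm (hsub (u n) lu) <= Rabs a * e) by (apply Rmult_le_compat_l; lra).
  assert (Rabs b * hnorm (hsub (v n) lv) <= Rabs b * e) by (apply Rmult_le_compat_l; lra).
  nra.
Qed.

Lemma hnorm_cv (u : nat -> H) l : norm_cv u l -> Un_cv (fun n => hnorm (u n)) (hnorm l).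
Proof.
  intro Hu. apply Un_cv_of_eventually. intros eps He.
  destruct (norm_cv_eventually _ _ Hu eps He) as [N HN]. exists N. intros n Hn.
  specialize (HN n Hn). pose proof (hnorm_sub_le (u n) l).
  pose proof (hnorm_sub_le l (u n)) as B. rewrite hnorm_sub_sym in B. lra.
Qed.

Lemma hnorm_sq_cv (u : nat -> H) l : norm_cv u l -> Un_cv (fun n => hnorm (u n) ^ 2) (hnorm l ^ 2).
Proof.
  intro Hu. pose proof (hnorm_cv _ _ Hu) as Hn. simpl.
  apply CV_mult; [exact Hn|]. apply CV_mult; [exact Hn | apply Un_cv_const].
Qed.

Lemma hinner_cv (u : nat -> H) l v : norm_cv u l -> Un_cv (fun n => hinner (u n) v) (hinner l v).
Proof.
  intro Hu. apply Un_cv_of_eventually. intros eps He.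
  pose proof (hnorm_ge0 v).
  destruct (norm_cv_eventually _ _ Hu (eps / (hnorm v + 1))) as [N HN].
  { apply Rdiv_lt_0_compat; lra. }
  exists N. intros n Hn. specialize (HN n Hn).
  pose proof (cauchy_schwarz (hsub (u n) l) v) as CS.
  replace (hinner (hsub (u n) l) v) with (hinner (u n) v - hinner l v) in CS
    by (unfold hsub; autorewrite with hinner; ring).
  assert (hnorm (hsub (u n) l) * hnorm v <= eps / (hnorm v + 1) * hnorm v)
    by (apply Rmult_le_compat_r; lra).
  assert (eps / (hnorm v + 1) * hnorm v < eps).
  { apply (Rmult_lt_reg_r (hnorm v + 1)); [lra|].
    replace (eps / (hnorm v + 1) * hnorm v * (hnorm v + 1)) with (eps * hnorm v) by (field; lra).
    nra. }
  assert (Habs : Rabs (hinner (u n) v - hinner l v) < eps) by lra.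
  apply Rabs_def2 in Habs. lra.
Qed.

Lemma norm_cv_of_cauchy_bound (u : nat -> H) (d : nat -> R) :
  (forall k m, (k < m)%nat -> hnorm (hsub (u m) (u k)) <= d k) -> Un_cv d 0 ->
  exists l, norm_cv u l /\ forall k, hnorm (hsub l (u k)) <= d k.
Proof.
  intros Hc Hd.
  destruct (hcomplete u) as [l Hl].
  { intros eps He. destruct (Un_cv_eventually d 0 Hd (eps / 2) ltac:(lra)) as [N HN]. exists N.
    intros m n Hm Hn. change (hnorm (hsub (u m) (u n)) < eps).
    destruct (Nat.lt_trichotomy m n) as [Hlt|[Heq|Hgt]].
    - rewrite hnorm_sub_sym. specialize (Hc m n Hlt). specialize (HN m Hm). lra.
    - subst. rewrite hnorm_sub_self. lra.
    - specialize (Hc n m Hgt). specialize (HN n Hn). lra. }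
  exists l. split; [exact Hl|]. intro k.
  apply (Rle_of_le_add_small _ _ 1 1); [lra|]. intros θ [Hθ _].
  destruct (norm_cv_eventually u l Hl θ Hθ) as [N HN].
  specialize (HN (S (N + k)) ltac:(lia)). specialize (Hc k (S (N + k)) ltac:(lia)).
  pose proof (hnorm_sub_triangle l (u (S (N + k))) (u k)).
  rewrite (hnorm_sub_sym l (u (S (N + k)))) in *. lra.
Qed.

End NormConvergence.

(** * Riesz representation and weak sequential compactness *)

Section Riesz.
Context {H : HilbertSpace}.
Implicit Types (W : H -> Prop) (l : H -> R).

Definition closed_subspace W : Prop :=
  W hzero /\ (forall u v, W u -> W v -> W (hadd u v)) /\ (forall a u, W u -> W (hscal a u)) /\
  (forall u, (forall eps, 0 < eps -> exists w, W w /\ hnorm (hsub u w) < eps) -> W u).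

Definition bounded_linear_on W l (L : R) : Prop :=
  (forall u v, W u -> W v -> l (hadd u v) = l u + l v) /\
  (forall a u, W u -> l (hscal a u) = a * l u) /\
  (forall u, W u -> Rabs (l u) <= L * hnorm u).

Definition riesz_energy l (w : H) : R := hnorm w ^ 2 / 2 - l w.

Section Minimizer.
Variables (W : H -> Prop) (l : H -> R) (L : R).
Hypotheses (HW : closed_subspace W) (Hl : bounded_linear_on W l L) (HL : 0 <= L).

Lemma riesz_energy_parallelogram a b : W a -> W b ->
  hnorm (hsub a b) ^ 2
  = 4 * riesz_energy l a + 4 * riesz_energy l b - 8 * riesz_energy l (hscal (1/2) (hadd a b)).
Proof.
  destruct HW as [_ [Wadd _]]. destruct Hl as [ladd [lscal _]]. intros Ha Hb.
  unfold riesz_energy. rewrite lscal, ladd by auto. rewrite !hnorm_sq.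
  unfold hsub. autorewrite with hinner. hinner_sym_normalize. field.
Qed.

Lemma riesz_energy_cv (ws : nat -> H) z : (forall k, W (ws k)) -> W z -> norm_cv ws z ->
  Un_cv (fun k => riesz_energy l (ws k)) (riesz_energy l z).
Proof.
  destruct HW as [_ [Wadd [Wscal _]]]. destruct Hl as [ladd [lscal lbd]]. intros Wws Wz Hz.
  unfold riesz_energy, Rminus. apply CV_plus.
  - unfold Rdiv. apply CV_mult; [apply hnorm_sq_cv, Hz | apply Un_cv_const].
  - apply CV_opp. apply Un_cv_of_eventually. intros eps Heps.
    destruct (norm_cv_eventually ws z Hz (eps / (L + 1))) as [N HN]; [apply Rdiv_lt_0_compat; lra|].
    exists N. intros n Hn. specialize (HN n Hn).
    assert (Wd : W (hsub (ws n) z)).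
    { apply Wadd; [apply Wws|]. replace (hopp z) with (hscal (-1) z) by vec_eq. apply Wscal, Wz. }
    assert (Ed : l (ws n) = l z + l (hsub (ws n) z)) by (rewrite <- ladd by auto; f_equal; vec_eq).
    specialize (lbd _ Wd).
    assert (L * hnorm (hsub (ws n) z) <= L * (eps / (L + 1))) by (apply Rmult_le_compat_l; lra).
    assert (L * (eps / (L + 1)) < eps).
    { apply (Rmult_lt_reg_r (L + 1)); [lra|].
      replace (L * (eps / (L + 1)) * (L + 1)) with (L * eps) by (field; lra). nra. }
    assert (Habs : Rabs (l (hsub (ws n) z)) < eps) by lra.
    apply Rabs_def2 in Habs. lra.
Qed.

Lemma riesz_energy_ge w : W w -> - (L * L / 2) <= riesz_energy l w.
Proof.
  destruct Hl as [_ [_ lbd]]. intro Hw. specialize (lbd w Hw). unfold riesz_energy.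
  pose proof (Rle_abs (l w)). pose proof (hnorm_ge0 w). pose proof (pow2_ge_0 (hnorm w - L)). nra.
Qed.

Lemma riesz_energy_minimizer :
  exists z, W z /\ forall w, W w -> riesz_energy l z <= riesz_energy l w.
Proof.
  pose proof HW as [W0 [Wadd [Wscal Wcl]]].
  set (J := riesz_energy l).
  destruct (inf_approx W J _ hzero riesz_energy_ge W0) as [s [Jge Happrox]].
  (* a minimizing sequence whose defect [e j] is small enough to make it [2^-j]-Cauchy *)
  set (e := fun j : nat => ((/ 2) ^ j) ^ 2 / 8).
  assert (He : forall j, 0 < e j) by (intro j; apply Rdiv_lt_0_compat; [apply pow_lt, pow_lt|]; lra).
  destruct (choice _ (fun j => Happrox (e j) (He j))) as [ws Hws].
  assert (Hc : forall k n, (k < n)%nat -> hnorm (hsub (ws n) (ws k)) <= (/ 2) ^ k).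
  { intros k n Hkn. destruct (Hws k) as [Wk Jk]. destruct (Hws n) as [Wn Jn].
    pose proof (riesz_energy_parallelogram (ws n) (ws k) Wn Wk) as M.
    pose proof (Jge _ (Wscal (1/2) _ (Wadd _ _ Wn Wk))) as G.
    assert (e n <= e k).
    { apply Rmult_le_compat_r; [lra|]. apply pow_incr. split; [apply pow_le; lra|].
      apply half_pow_le. lia. }
    assert (hnorm (hsub (ws n) (ws k)) ^ 2 <= ((/ 2) ^ k) ^ 2) by (unfold e, J in *; lra).
    pose proof (hnorm_ge0 (hsub (ws n) (ws k))). pose proof (pow_le (/2) k ltac:(lra)). nra. }
  pose proof (half_pow_cv0 1) as Hcv0. rewrite (functional_extensionality _ (fun k => (/ 2) ^ k))
    in Hcv0 by (intro; ring).
  destruct (norm_cv_of_cauchy_bound ws _ Hc Hcv0) as [z [Hz Hzk]].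
  assert (Wz : W z).
  { apply Wcl. intros eps Heps. destruct (Un_cv_eventually _ _ Hcv0 eps Heps) as [N HN].
    exists (ws N). split; [apply (Hws N)|]. specialize (Hzk N). specialize (HN N (le_n N)). lra. }
  exists z. split; [exact Wz|]. intros w Hw.
  enough (J z <= s) by (pose proof (Jge w Hw); lra).
  assert (E0 : Un_cv e 0).
  { replace 0 with (0 * 0 / 8) by field. unfold e, Rdiv. apply CV_mult; [|apply Un_cv_const].
    replace (fun j : nat => ((/ 2) ^ j) ^ 2) with (fun j : nat => (/ 2) ^ j * (/ 2) ^ j)
      by (apply functional_extensionality; intro; ring).
    apply CV_mult; exact Hcv0. }
  pose proof (CV_plus _ _ _ _ (Un_cv_const s) E0) as Hs. rewrite Rplus_0_r in Hs.
  exact (Rle_cv_lim (fun k => Rlt_le _ _ (proj2 (Hws k)))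
           (riesz_energy_cv ws z (fun k => proj1 (Hws k)) Wz Hz) Hs).
Qed.

End Minimizer.

(* The minimizer of [|w|^2 / 2 - l w] on [W] represents [l]. *)
Lemma riesz_closed_subspace W l L : closed_subspace W -> bounded_linear_on W l L -> 0 <= L ->
  exists z, W z /\ forall w, W w -> l w = hinner z w.
Proof.
  intros HW Hl HL. pose proof HW as [_ [Wadd [Wscal _]]]. pose proof Hl as [ladd [lscal _]].
  destruct (riesz_energy_minimizer W l L HW Hl HL) as [z [Wz Hmin]].
  exists z. split; [exact Wz|]. intros w Hw.
  assert (Q : forall t, 0 <= t * (hinner z w - l w) + t ^ 2 * (hnorm w ^ 2 / 2)).
  { intro t. pose proof (Hmin _ (Wadd _ _ Wz (Wscal t w Hw))) as G.
    unfold riesz_energy in G. rewrite ladd, lscal in G by auto. rewrite !hnorm_sq in *.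
    autorewrite with hinner in G. rewrite (hinner_sym w z) in G. nra. }
  apply eq0_of_quadratic_ge0 in Q; [lra|]. pose proof (pow2_ge_0 (hnorm w)). lra.
Qed.

End Riesz.

Lemma bounded_cv_reindex (u : nat -> R) K : (forall n, Rabs (u n) <= K) ->
  exists g : nat -> nat, (forall N, (N <= g N)%nat) /\ exists l, Un_cv (fun n => u (g n)) l.
Proof.
  intro Hb.
  destruct (Bolzano_Weierstrass u (fun c => - K <= c <= K) (compact_P3 (- K) K)) as [l Hl].
  { intro n. specialize (Hb n). apply Rabs_le_between in Hb. exact Hb. }
  assert (Hall : forall N, exists p, (N <= p)%nat /\ Rabs (u p - l) < inv_succ N).
  { intro N. destruct (Hl (fun y => Rabs (y - l) < inv_succ N) N) as [p [Hp Hv]].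
    - exists (mkposreal (inv_succ N) (inv_succ_pos N)). intros y Hy. exact Hy.
    - exists p. auto. }
  destruct (choice _ Hall) as [g Hg]. exists g. split; [intro N; apply (Hg N)|].
  exists l. apply Un_cv_of_eventually. intros eps He.
  destruct (Un_cv_eventually _ 0 inv_succ_cv0 eps He) as [N HN].
  exists N. intros n Hn. specialize (HN n Hn). destruct (Hg n) as [_ A]. apply Rabs_def2 in A. lra.
Qed.

Definition cv_select (u : nat -> R) : nat -> nat :=
  epsilon (inhabits (fun n : nat => n))
    (fun g => (forall N, (N <= g N)%nat) /\ exists l, Un_cv (fun n => u (g n)) l).

Lemma cv_select_spec (u : nat -> R) K : (forall n, Rabs (u n) <= K) ->
  (forall N, (N <= cv_select u N)%nat) /\ exists l, Un_cv (fun n => u (cv_select u n)) l.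
Proof. intro Hb. unfold cv_select. apply epsilon_spec. exact (bounded_cv_reindex u K Hb). Qed.

(* [nested_select a m] makes the rows [a 0, ..., a (m-1)] converge simultaneously. *)
Fixpoint nested_select (a : nat -> nat -> R) (m : nat) : nat -> nat :=
  match m with
  | O => fun n => n
  | S m' => fun n => nested_select a m' (cv_select (fun k => a m' (nested_select a m' k)) n)
  end.

Section Diagonal.
Variables (a : nat -> nat -> R) (K : nat -> R).
Hypothesis Hb : forall m n, Rabs (a m n) <= K m.

Lemma nested_select_tail m j n :
  exists p, (n <= p)%nat /\ nested_select a (m + j) n = nested_select a m p.
Proof.
  revert n. induction j as [|j IH]; intro n.
  - exists n. rewrite Nat.add_0_r. auto.
  - rewrite Nat.add_succ_r. simpl.
    set (u := fun k => a (m + j)%nat (nested_select a (m + j) k)).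
    destruct (cv_select_spec u (K (m + j)%nat) (fun k => Hb _ _)) as [Hge _].
    destruct (IH (cv_select u n)) as [p [Hp Ep]].
    exists p. split; [specialize (Hge n); lia | exact Ep].
Qed.

Lemma diagonal_cv_reindex :
  exists g : nat -> nat, (forall N, (N <= g N)%nat) /\
    forall m, exists l, Un_cv (fun k => a m (g k)) l.
Proof.
  exists (fun k => nested_select a k k). split.
  - intro N. destruct (nested_select_tail 0 N N) as [p [Hp Ep]]. simpl in Ep. rewrite Ep. exact Hp.
  - intro m.
    destruct (cv_select_spec (fun k => a m (nested_select a m k)) (K m) (fun k => Hb _ _))
      as [_ [l Hl]].
    exists l. apply Un_cv_of_eventually. intros eps He.
    destruct (Un_cv_eventually _ _ Hl eps He) as [N HN].
    exists (S m + N)%nat. intros k Hk.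
    destruct (nested_select_tail (S m) (k - S m) k) as [p [Hp Ep]].
    replace (S m + (k - S m))%nat with k in Ep by lia. rewrite Ep. apply HN. lia.
Qed.

End Diagonal.

Section WeakCompactness.
Context {H : HilbertSpace}.

Inductive span_of (z : nat -> H) : H -> Prop :=
| span_zero : span_of z hzero
| span_gen m : span_of z (z m)
| span_add u v : span_of z u -> span_of z v -> span_of z (hadd u v)
| span_scal a u : span_of z u -> span_of z (hscal a u).

Definition closed_span (z : nat -> H) (u : H) : Prop :=
  forall eps, 0 < eps -> exists v, span_of z v /\ hnorm (hsub u v) < eps.

Lemma span_in_closed_span z u : span_of z u -> closed_span z u.
Proof. intros Hu eps He. exists u. rewrite hnorm_sub_self. auto. Qed.

Lemma closed_span_subspace z : closed_subspace (closed_span z).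
Proof.
  split; [|split; [|split]].
  - apply span_in_closed_span. constructor.
  - intros u v Hu Hv eps He.
    destruct (Hu (eps / 2) ltac:(lra)) as [u' [Hu' Au]].
    destruct (Hv (eps / 2) ltac:(lra)) as [v' [Hv' Av]].
    exists (hadd u' v'). split; [constructor; auto|].
    replace (hsub (hadd u v) (hadd u' v')) with (hadd (hsub u u') (hsub v v')) by vec_eq.
    pose proof (hnorm_triangle (hsub u u') (hsub v v')). lra.
  - intros a u Hu eps He. pose proof (Rabs_pos a).
    destruct (Hu (eps / (Rabs a + 1))) as [u' [Hu' Au]]; [apply Rdiv_lt_0_compat; lra|].
    exists (hscal a u'). split; [constructor; auto|].
    replace (hsub (hscal a u) (hscal a u')) with (hscal a (hsub u u')) by vec_eq.
    rewrite hnorm_scal.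
    assert (Rabs a * hnorm (hsub u u') <= Rabs a * (eps / (Rabs a + 1)))
      by (apply Rmult_le_compat_l; lra).
    assert (Rabs a * (eps / (Rabs a + 1)) < eps).
    { apply (Rmult_lt_reg_r (Rabs a + 1)); [lra|].
      replace (Rabs a * (eps / (Rabs a + 1)) * (Rabs a + 1)) with (Rabs a * eps) by (field; lra).
      nra. }
    lra.
  - intros u Hu eps He. destruct (Hu (eps / 2) ltac:(lra)) as [w [Hw Aw]].
    destruct (Hw (eps / 2) ltac:(lra)) as [v [Hv Av]]. exists v. split; auto.
    pose proof (hnorm_sub_triangle u w v). lra.
Qed.

Lemma hinner_cv_on_span (z y : nat -> H) :
  (forall m, exists l, Un_cv (fun k => hinner (y k) (z m)) l) ->
  forall v, span_of z v -> exists l, Un_cv (fun k => hinner (y k) v) l.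
Proof.
  intros Hm v Hv. induction Hv as [|m|u v Hu [l1 H1] Hv [l2 H2]|a u Hu [l1 H1]].
  - exists 0. apply (Un_cv_ext (fun _ => 0)); [intro k; symmetry; apply hinner_zero_r|].
    apply Un_cv_const.
  - apply Hm.
  - exists (l1 + l2). apply (Un_cv_ext (fun k => hinner (y k) u + hinner (y k) v)).
    + intro k. symmetry. apply hinner_add_r.
    + apply CV_plus; auto.
  - exists (a * l1). apply (Un_cv_ext (fun k => a * hinner (y k) u)).
    + intro k. symmetry. apply hinner_scal_r.
    + apply Un_cv_scal; auto.
Qed.

Lemma hinner_cv_on_closed_span (z y : nat -> H) B :
  (forall k, hnorm (y k) <= B) ->
  (forall m, exists l, Un_cv (fun k => hinner (y k) (z m)) l) ->
  forall u, closed_span z u -> exists l, Un_cv (fun k => hinner (y k) u) l.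
Proof.
  intros Hy Hm u Hu.
  assert (HB : 0 <= B) by (pose proof (Hy O); pose proof (hnorm_ge0 (y O)); lra).
  assert (Cc : Cauchy_crit (fun k => hinner (y k) u)).
  { intros eps He.
    destruct (Hu (eps / (4 * B + 1))) as [v [Hv Av]]; [apply Rdiv_lt_0_compat; lra|].
    destruct (hinner_cv_on_span z y Hm v Hv) as [l Hl].
    destruct (Un_cv_eventually _ _ Hl (eps / 4) ltac:(lra)) as [N HN]. exists N.
    intros n k Hn Hk. unfold Rdist.
    replace (hinner (y n) u - hinner (y k) u)
      with ((hinner (y n) v - hinner (y k) v) + hinner (hsub (y n) (y k)) (hsub u v))
      by (unfold hsub; autorewrite with hinner; ring).
    eapply Rle_lt_trans; [apply Rabs_triang|].
    specialize (HN n Hn) as A1. specialize (HN k Hk) as A2.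
    assert (Rabs (hinner (y n) v - hinner (y k) v) < eps / 2) by (apply Rabs_def1; lra).
    pose proof (cauchy_schwarz (hsub (y n) (y k)) (hsub u v)).
    pose proof (hnorm_triangle (y n) (hopp (y k))) as Tr. rewrite hnorm_opp in Tr.
    change (hadd (y n) (hopp (y k))) with (hsub (y n) (y k)) in Tr.
    pose proof (Hy n). pose proof (Hy k).
    pose proof (hnorm_ge0 (hsub (y n) (y k))). pose proof (hnorm_ge0 (hsub u v)).
    assert (hnorm (hsub (y n) (y k)) * hnorm (hsub u v) <= (2 * B) * (eps / (4 * B + 1)))
      by (apply Rmult_le_compat; lra).
    assert ((2 * B) * (eps / (4 * B + 1)) < eps / 2).
    { apply (Rmult_lt_reg_r (4 * B + 1)); [lra|].
      replace (2 * B * (eps / (4 * B + 1)) * (4 * B + 1)) with (2 * B * eps) by (field; lra). nra. }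
    lra. }
  destruct (R_complete _ Cc) as [l Hl]. exists l. exact Hl.
Qed.

(* A bounded sequence in a closed subspace [W] along which [hinner (y k) u] converges for every
   [u] in [W] converges weakly: represent the limit functional on [W] by Riesz, and test an
   arbitrary vector [v] through the representative of [hinner v] on [W]. *)
Lemma weak_cv_of_cv_on_subspace (W : H -> Prop) (y : nat -> H) B :
  closed_subspace W -> (forall k, W (y k)) -> (forall k, hnorm (y k) <= B) ->
  (forall u, W u -> exists l, Un_cv (fun k => hinner (y k) u) l) ->
  exists w, weak_cv y w.
Proof.
  intros CW Wy Hy Hl.
  assert (HB : 0 <= B) by (pose proof (Hy O); pose proof (hnorm_ge0 (y O)); lra).
  set (ell := fun u => epsilon (inhabits 0) (fun l => Un_cv (fun k => hinner (y k) u) l)).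
  assert (Hell : forall u, W u -> Un_cv (fun k => hinner (y k) u) (ell u))
    by (intros u Hu; apply epsilon_spec, Hl, Hu).
  pose proof CW as [_ [Wadd [Wscal _]]].
  assert (LW : bounded_linear_on W ell B).
  { split; [|split].
    - intros u v Hu Hv. apply (UL_sequence (fun k => hinner (y k) (hadd u v))); [apply Hell; auto|].
      apply (Un_cv_ext (fun k => hinner (y k) u + hinner (y k) v));
        [intro k; symmetry; apply hinner_add_r | apply CV_plus; apply Hell; auto].
    - intros a u Hu. apply (UL_sequence (fun k => hinner (y k) (hscal a u))); [apply Hell; auto|].
      apply (Un_cv_ext (fun k => a * hinner (y k) u));
        [intro k; symmetry; apply hinner_scal_r | apply Un_cv_scal, Hell, Hu].
    - intros u Hu. apply Rabs_le.
      assert (Hb : forall k, - (B * hnorm u) <= hinner (y k) u <= B * hnorm u).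
      { intro k. apply Rabs_le_between. eapply Rle_trans; [apply cauchy_schwarz|].
        apply Rmult_le_compat_r; [apply hnorm_ge0 | apply Hy]. }
      split.
      + exact (Rle_cv_lim (fun k => proj1 (Hb k)) (Un_cv_const _) (Hell u Hu)).
      + exact (Rle_cv_lim (fun k => proj2 (Hb k)) (Hell u Hu) (Un_cv_const _)). }
  destruct (riesz_closed_subspace W ell B CW LW HB) as [zs [Wzs Hzs]].
  exists zs. intro v.
  assert (LV : bounded_linear_on W (fun w => hinner v w) (hnorm v)).
  { split; [|split]; intros.
    - apply hinner_add_r.
    - apply hinner_scal_r.
    - apply cauchy_schwarz. }
  destruct (riesz_closed_subspace W _ _ CW LV (hnorm_ge0 v)) as [pv [Wpv Hpv]].
  replace (fun k => hinner (y k) v) with (fun k => hinner (y k) pv).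
  - replace (hinner zs v) with (ell pv); [apply Hell, Wpv|].
    rewrite Hzs, (hinner_sym zs v), Hpv by auto. apply hinner_sym.
  - apply functional_extensionality. intro k.
    rewrite (hinner_sym (y k) v), (hinner_sym (y k) pv). symmetry. apply Hpv, Wy.
Qed.

Lemma weak_cv_reindex_of_bounded (z : nat -> H) B :
  (forall n, hnorm (z n) <= B) ->
  exists g : nat -> nat, (forall N, (N <= g N)%nat) /\ exists w, weak_cv (fun n => z (g n)) w.
Proof.
  intro Hz.
  destruct (diagonal_cv_reindex (fun m n => hinner (z n) (z m)) (fun m => B * hnorm (z m)))
    as [g [Hg Hcv]].
  { intros m n. eapply Rle_trans; [apply cauchy_schwarz|].
    apply Rmult_le_compat_r; [apply hnorm_ge0 | apply Hz]. }
  exists g. split; [exact Hg|].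
  apply (weak_cv_of_cv_on_subspace (closed_span z) _ B (closed_span_subspace z)).
  - intro k. apply span_in_closed_span, span_gen.
  - intro k. apply Hz.
  - apply (hinner_cv_on_closed_span z _ B); [intro k; apply Hz | exact Hcv].
Qed.

End WeakCompactness.

(** * The Borwein-Preiss variational principle *)

(* [0] is a junk value at [PInf]; [fval] is only used for functions that are finite everywhere. *)
Definition fval {H : HilbertSpace} (f : H -> ereal) (x : H) : R :=
  match f x with Fin r => r | PInf => 0 end.

Section VariationalPrinciple.
Context {H : HilbertSpace}.

Lemma approx_argmin (B : H -> Prop) (Phi : H -> R) m x eps :
  (forall y, B y -> m <= Phi y) -> B x -> 0 < eps ->
  exists y, B y /\ Phi y <= Phi x /\ forall w, B w -> Phi y <= Phi w + eps.
Proof.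
  intros Hm Bx He.
  destruct (inf_approx B Phi m x Hm Bx) as [s [Hs Happrox]].
  destruct (Happrox eps He) as [w [Bw Hw]].
  destruct (Rle_dec (Phi w) (Phi x)).
  - exists w. split; [|split]; auto. intros w' Bw'. specialize (Hs w' Bw'). lra.
  - exists x. split; [|split]; auto; [lra|]. intros w' Bw'. specialize (Hs w' Bw'). lra.
Qed.

Lemma lsc_add_le (f : H -> ereal) (q : H -> R) (ym : nat -> H) y v :
  lsc f -> (forall y, f y = Fin (fval f y)) -> Un_cv (fun m => q (ym m)) (q y) -> norm_cv ym y ->
  eventually (fun m => fval f (ym m) + q (ym m) <= v) -> fval f y + q y <= v.
Proof.
  intros Hl Hfin Hq Hy [k0 Hle]. apply Rnot_lt_le. intro Hlt.
  set (g := (fval f y + q y - v) / 2).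
  destruct (Hl y (v - q y + g)) as [dl [Hdl Hd]]; [rewrite Hfin; simpl; unfold g; lra|].
  destruct (eventually_and _ _ (norm_cv_eventually ym y Hy dl Hdl)
              (Un_cv_eventually _ _ Hq g ltac:(unfold g; lra))) as [N HN].
  destruct (HN (N + k0)%nat ltac:(lia)) as [A B].
  specialize (Hd _ A). rewrite Hfin in Hd. simpl in Hd.
  specialize (Hle (N + k0)%nat ltac:(lia)). lra.
Qed.

(* A quadratic [C |y|^2 - 2 <y, S> + D], coded by the triple [(C, S, D)]. *)
Definition quad (q : R * H * R) (y : H) : R :=
  fst (fst q) * hnorm y ^ 2 - 2 * hinner y (snd (fst q)) + snd q.

Definition quad_add (c : R) (x : H) (q : R * H * R) : R * H * R :=
  (fst (fst q) + c, hadd (snd (fst q)) (hscal c x), snd q + c * hnorm x ^ 2).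

Lemma quad_add_eval c x q y : quad (quad_add c x q) y = quad q y + c * hnorm (hsub y x) ^ 2.
Proof.
  unfold quad, quad_add. cbn [fst snd]. rewrite !hnorm_sq. unfold hsub.
  autorewrite with hinner. hinner_sym_normalize. ring.
Qed.

Lemma quad_cv q (ym : nat -> H) y : norm_cv ym y -> Un_cv (fun m => quad q (ym m)) (quad q y).
Proof.
  intro Hy. unfold quad, Rminus. apply CV_plus; [apply CV_plus|].
  - apply Un_cv_scal, hnorm_sq_cv, Hy.
  - apply CV_opp, Un_cv_scal, hinner_cv, Hy.
  - apply Un_cv_const.
Qed.

Definition penalized (f : H -> ereal) q (y : H) : R := fval f y + quad q y.

Section BorweinPreiss.
Variables (f : H -> ereal) (x0 : H) (rho c0 eta m : R).
Hypotheses (f_lsc : lsc f) (f_fin : forall y, f y = Fin (fval f y)) (rho_pos : 0 < rho) (eta_pos : 0 < eta)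
  (c0_pos : 0 < c0) (f_ge_m : forall y, hnorm (hsub y x0) <= rho -> m <= fval f y)
  (f_x0 : fval f x0 <= m + c0 * eta ^ 2).

Definition in_ball (y : H) : Prop := hnorm (hsub y x0) <= rho.

Definition bp_weight (k : nat) : R := c0 * (/ 2) ^ k.
Definition bp_radius (k : nat) : R := eta * (/ 2) ^ k.
Definition bp_tol (k : nat) : R := bp_weight k * bp_radius k ^ 2.

Definition approx_argmin_of q (x : H) (e : R) : H :=
  epsilon (inhabits x0) (fun y => in_ball y /\ penalized f q y <= penalized f q x /\
     forall w, in_ball w -> penalized f q y <= penalized f q w + e).

Fixpoint bp_iter (k : nat) : H * (R * H * R) :=
  match k with
  | O => (x0, (0, hzero, 0))
  | S k' => let p := bp_iter k' in
            let q := quad_add (bp_weight k') (fst p) (snd p) in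
            (approx_argmin_of q (fst p) (bp_tol (S k')), q)
  end.

Let xs k := fst (bp_iter k).
Let qs k := snd (bp_iter k).

Lemma bp_weight_pos k : 0 < bp_weight k.
Proof. apply Rmult_lt_0_compat; [exact c0_pos | apply pow_lt; lra]. Qed.

Lemma bp_tol_pos k : 0 < bp_tol k.
Proof.
  apply Rmult_lt_0_compat; [apply bp_weight_pos|].
  apply pow_lt, Rmult_lt_0_compat; [exact eta_pos | apply pow_lt; lra].
Qed.

Lemma quad_iter_ge0 k y : 0 <= quad (qs k) y.
Proof.
  unfold qs. induction k as [|k IH].
  - unfold quad. simpl. rewrite hinner_zero_r. lra.
  - simpl. rewrite quad_add_eval. pose proof (bp_weight_pos k).
    pose proof (pow2_ge_0 (hnorm (hsub y (fst (bp_iter k))))). nra.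
Qed.

Lemma quad_iter_mono k j y : quad (qs k) y <= quad (qs (k + j)) y.
Proof.
  unfold qs. induction j as [|j IH]; [rewrite Nat.add_0_r; lra|].
  rewrite Nat.add_succ_r. simpl. rewrite quad_add_eval. pose proof (bp_weight_pos (k + j)).
  pose proof (pow2_ge_0 (hnorm (hsub y (fst (bp_iter (k + j)))))). nra.
Qed.

Lemma bp_iter_succ_spec k : in_ball (xs k) ->
  in_ball (xs (S k)) /\ penalized f (qs (S k)) (xs (S k)) <= penalized f (qs (S k)) (xs k) /\
  forall w, in_ball w -> penalized f (qs (S k)) (xs (S k)) <= penalized f (qs (S k)) w + bp_tol (S k).
Proof.
  intro Hk. unfold xs, qs in *. simpl. unfold approx_argmin_of. apply epsilon_spec.
  apply (approx_argmin in_ball _ m); [|exact Hk|apply bp_tol_pos].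
  intros y Hy. unfold penalized. rewrite quad_add_eval.
  pose proof (quad_iter_ge0 k y). pose proof (bp_weight_pos k).
  pose proof (pow2_ge_0 (hnorm (hsub y (fst (bp_iter k))))). specialize (f_ge_m y Hy).
  unfold qs in *. nra.
Qed.

Lemma bp_iter_in_ball k : in_ball (xs k).
Proof.
  induction k as [|k IH].
  - unfold xs, in_ball. simpl. rewrite hnorm_sub_self. lra.
  - apply (bp_iter_succ_spec k IH).
Qed.

Lemma bp_iter_near_min k w : in_ball w -> penalized f (qs k) (xs k) <= penalized f (qs k) w + bp_tol k.
Proof.
  destruct k as [|k].
  - intro Hw. unfold penalized, quad, bp_tol, bp_weight, bp_radius, xs, qs. simpl.
    rewrite !hinner_zero_r. specialize (f_ge_m w Hw). nra.
  - apply (bp_iter_succ_spec k (bp_iter_in_ball k)).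
Qed.

Lemma bp_iter_decr k : penalized f (qs (S k)) (xs (S k)) <= penalized f (qs k) (xs k).
Proof.
  destruct (bp_iter_succ_spec k (bp_iter_in_ball k)) as [_ [A _]]. eapply Rle_trans; [exact A|].
  unfold penalized, qs, xs. simpl. rewrite quad_add_eval, hnorm_sub_self. lra.
Qed.

Lemma bp_iter_decr_add k j : penalized f (qs (k + j)) (xs (k + j)) <= penalized f (qs k) (xs k).
Proof.
  induction j as [|j IH]; [rewrite Nat.add_0_r; lra|].
  rewrite Nat.add_succ_r. eapply Rle_trans; [apply bp_iter_decr | exact IH].
Qed.

Lemma bp_iter_trap k w : in_ball w ->
  penalized f (qs (S k)) w <= penalized f (qs k) (xs k) -> hnorm (hsub w (xs k)) <= bp_radius k.
Proof.
  intros Hw Hle. pose proof (bp_iter_near_min k w Hw) as S2.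
  unfold penalized, qs, xs in *. simpl in Hle. rewrite quad_add_eval in Hle.
  assert (Hsq : bp_weight k * hnorm (hsub w (fst (bp_iter k))) ^ 2 <= bp_weight k * bp_radius k ^ 2)
    by (unfold bp_tol in S2; lra).
  apply Rmult_le_reg_l in Hsq; [|apply bp_weight_pos].
  pose proof (hnorm_ge0 (hsub w (fst (bp_iter k)))).
  assert (0 < bp_radius k) by (apply Rmult_lt_0_compat; [exact eta_pos | apply pow_lt; lra]).
  nra.
Qed.

Lemma bp_iter_cauchy k n : (k < n)%nat -> hnorm (hsub (xs n) (xs k)) <= bp_radius k.
Proof.
  intro Hkn. apply bp_iter_trap; [apply bp_iter_in_ball|].
  replace n with (S k + (n - S k))%nat by lia.
  pose proof (quad_iter_mono (S k) (n - S k) (xs (S k + (n - S k)))).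
  pose proof (bp_iter_decr_add (S k) (n - S k)). pose proof (bp_iter_decr k).
  unfold penalized in *. lra.
Qed.

Lemma bp_weight_total k : fst (fst (qs k)) = 2 * c0 * (1 - (/ 2) ^ k).
Proof.
  unfold qs. induction k as [|k IH]; simpl; [ring|]. rewrite IH. unfold bp_weight. field.
Qed.

Lemma bp_iter_bounded k : hnorm (xs k) <= hnorm x0 + rho.
Proof. pose proof (hnorm_sub_le (xs k) x0). pose proof (bp_iter_in_ball k). unfold in_ball in *. lra. Qed.

Lemma bp_center_step k j :
  hnorm (hsub (snd (fst (qs (k + j)))) (snd (fst (qs k))))
   <= (fst (fst (qs (k + j))) - fst (fst (qs k))) * (hnorm x0 + rho).
Proof.
  induction j as [|j IH].
  - rewrite Nat.add_0_r, hnorm_sub_self. lra.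
  - rewrite Nat.add_succ_r. unfold qs at 1 3. simpl.
    fold (xs (k + j)). fold (qs (k + j)).
    replace (hsub (hadd (snd (fst (qs (k + j)))) (hscal (bp_weight (k + j)) (xs (k + j))))
                  (snd (fst (qs k))))
      with (hadd (hsub (snd (fst (qs (k + j)))) (snd (fst (qs k))))
                 (hscal (bp_weight (k + j)) (xs (k + j)))) by vec_eq.
    eapply Rle_trans; [apply hnorm_triangle|].
    pose proof (bp_weight_pos (k + j)). pose proof (bp_iter_bounded (k + j)).
    rewrite hnorm_scal, Rabs_right by lra.
    assert (bp_weight (k + j) * hnorm (xs (k + j)) <= bp_weight (k + j) * (hnorm x0 + rho))
      by (apply Rmult_le_compat_l; lra).
    nra.
Qed.

Lemma bp_center_cv : exists S, norm_cv (fun k => snd (fst (qs k))) S.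
Proof.
  assert (HR : 0 <= hnorm x0 + rho) by (pose proof (hnorm_ge0 x0); lra).
  destruct (norm_cv_of_cauchy_bound (fun k => snd (fst (qs k)))
              (fun k => 2 * c0 * (hnorm x0 + rho) * (/ 2) ^ k)) as [S [HS _]].
  - intros k n Hkn. replace n with (k + (n - k))%nat by lia.
    eapply Rle_trans; [apply bp_center_step|]. rewrite !bp_weight_total.
    pose proof (pow_le (/ 2) (k + (n - k)) ltac:(lra)).
    assert (0 <= c0 * (hnorm x0 + rho) * (/ 2) ^ (k + (n - k)))
      by (apply Rmult_le_pos; [apply Rmult_le_pos|]; lra).
    nra.
  - apply half_pow_cv0.
  - exists S. exact HS.
Qed.

Section Limit.
Variables (xi Sl : H).
Hypotheses (Hxi : norm_cv xs xi) (Hxik : forall k, hnorm (hsub xi (xs k)) <= bp_radius k)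
  (HS : norm_cv (fun k => snd (fst (qs k))) Sl).

Lemma bp_limit_le k : penalized f (qs k) xi <= penalized f (qs k) (xs k).
Proof.
  unfold penalized. apply (lsc_add_le f (quad (qs k)) xs xi); auto.
  - apply quad_cv, Hxi.
  - exists k. intros n Hn. replace n with (k + (n - k))%nat by lia.
    pose proof (quad_iter_mono k (n - k) (xs (k + (n - k))%nat)).
    pose proof (bp_iter_decr_add k (n - k)). unfold penalized in *. lra.
Qed.

Lemma bp_quad_diff_cv w :
  Un_cv (fun k => quad (qs k) w - quad (qs k) xi)
    (2 * c0 * (hnorm w ^ 2 - hnorm xi ^ 2) - 2 * (hinner Sl w - hinner Sl xi)).
Proof.
  apply (Un_cv_ext (fun k => fst (fst (qs k)) * (hnorm w ^ 2 - hnorm xi ^ 2)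
                        - 2 * (hinner (snd (fst (qs k))) w - hinner (snd (fst (qs k))) xi))).
  { intro k. unfold quad. rewrite (hinner_sym w), (hinner_sym xi). ring. }
  apply CV_minus.
  - apply CV_mult; [|apply Un_cv_const].
    apply (Un_cv_ext (fun k => 2 * c0 + - (2 * c0 * (/ 2) ^ k))).
    { intro k. rewrite bp_weight_total. ring. }
    pose proof (CV_plus _ _ _ _ (Un_cv_const (2 * c0)) (CV_opp _ _ (half_pow_cv0 (2 * c0)))) as X.
    rewrite Ropp_0, Rplus_0_r in X. exact X.
  - apply Un_cv_scal, CV_minus; apply hinner_cv, HS.
Qed.

(* The limit minimizes [f] plus the limit quadratic on the ball, since a competitor doing
   strictly better would be trapped in all the shrinking balls around [xs k]. *)
Lemma bp_limit_min w : in_ball w ->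
  0 <= fval f w - fval f xi + (2 * c0 * (hnorm w ^ 2 - hnorm xi ^ 2) - 2 * (hinner Sl w - hinner Sl xi)).
Proof.
  intro Hw. apply Rnot_lt_le. intro Hlt.
  set (g := fval f w - fval f xi + (2 * c0 * (hnorm w ^ 2 - hnorm xi ^ 2)
                                     - 2 * (hinner Sl w - hinner Sl xi))) in *.
  destruct (Un_cv_eventually _ _ (bp_quad_diff_cv w) (- g) ltac:(lra)) as [N HN].
  assert (Hz : hnorm (hsub w xi) <= 0).
  { apply (Un_cv_ge_of_eventually (fun k => 2 * bp_radius k)).
    - replace 0 with (2 * 0) by ring. apply Un_cv_scal, half_pow_cv0.
    - exists N. intros k Hk.
      assert (Hclose : hnorm (hsub w (xs k)) <= bp_radius k).
      { apply bp_iter_trap; [exact Hw|].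
        specialize (HN (S k) ltac:(lia)). pose proof (bp_limit_le (S k)). pose proof (bp_iter_decr k).
        unfold penalized, g in *. lra. }
      pose proof (hnorm_sub_triangle w (xs k) xi). specialize (Hxik k).
      rewrite (hnorm_sub_sym (xs k) xi) in *. lra. }
  assert (w = xi).
  { apply eq_of_hinner_sub_eq0. rewrite <- hnorm_mul_self.
    pose proof (hnorm_ge0 (hsub w xi)). nra. }
  subst w. unfold g in Hlt. lra.
Qed.

End Limit.

Lemma borwein_preiss : eta < rho -> exists x z, hnorm (hsub x x0) <= eta /\ prox_subdiff f x z.
Proof.
  intro Her.
  destruct (norm_cv_of_cauchy_bound xs bp_radius bp_iter_cauchy (half_pow_cv0 eta)) as [xi [Hxi Hxik]].
  destruct bp_center_cv as [Sl HS].
  exists xi, (hsub (hscal 2 Sl) (hscal (4 * c0) xi)). split.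
  { specialize (Hxik O). unfold xs, bp_radius in Hxik. simpl in Hxik. lra. }
  exists (fval f xi). split; [apply f_fin|].
  exists (4 * c0), (rho - eta). split; [lra|]. split; [lra|].
  intros y Hy. rewrite f_fin. cbn [ere_le].
  assert (Hy0 : in_ball y).
  { pose proof (hnorm_sub_triangle y xi x0). specialize (Hxik O). unfold xs, bp_radius in Hxik.
    simpl in Hxik. unfold in_ball. lra. }
  pose proof (bp_limit_min xi Sl Hxi Hxik HS y Hy0) as G.
  rewrite !hnorm_sq in *. unfold hsub in *. autorewrite with hinner in *.
  rewrite (hinner_sym y xi). nra.
Qed.

End BorweinPreiss.

End VariationalPrinciple.

(** * Paraconcave functions and their second-order quotients *)

Section Paraconcave.
Context {H : HilbertSpace}.

Definition paraconcave_with (f : H -> ereal) (lambda : R) : Prop :=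
  forall x y t r s, 0 <= t <= 1 ->
    ere_le (Fin (r + (hnorm x)^2 / (2 * lambda))) (f x) ->
    ere_le (Fin (s + (hnorm y)^2 / (2 * lambda))) (f y) ->
    let z := hadd (hscal t x) (hscal (1 - t) y) in
    ere_le (Fin (t * r + (1 - t) * s + (hnorm z)^2 / (2 * lambda))) (f z).

Lemma hnorm_sq_convex_defect (x y : H) t :
  t * hnorm x ^ 2 + (1 - t) * hnorm y ^ 2 - hnorm (hadd (hscal t x) (hscal (1 - t) y)) ^ 2
  = t * (1 - t) * hnorm (hsub x y) ^ 2.
Proof. rewrite !hnorm_sq. unfold hsub. autorewrite with hinner. hinner_sym_normalize. ring. Qed.

Lemma ere_le_weaken (e : ereal) u v : ere_le (Fin u) e -> v <= u -> ere_le (Fin v) e.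
Proof. destruct e; simpl; intros; lra || auto. Qed.

Variables (f : H -> ereal) (lam : R) (xbar : H).
Hypotheses (lam_pos : 0 < lam) (f_pc : paraconcave_with f lam) (f_cont : continuous_at f xbar).

Lemma paraconcave_Fin x y t a b : 0 <= t <= 1 -> f x = Fin a -> f y = Fin b ->
  ere_le (Fin (t * a + (1 - t) * b - t * (1 - t) * hnorm (hsub x y) ^ 2 / (2 * lam)))
         (f (hadd (hscal t x) (hscal (1 - t) y))).
Proof.
  intros Ht Ha Hb.
  assert (P1 : ere_le (Fin (a - hnorm x ^ 2 / (2 * lam) + hnorm x ^ 2 / (2 * lam))) (f x))
    by (rewrite Ha; simpl; lra).
  assert (P2 : ere_le (Fin (b - hnorm y ^ 2 / (2 * lam) + hnorm y ^ 2 / (2 * lam))) (f y))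
    by (rewrite Hb; simpl; lra).
  eapply ere_le_weaken; [exact (f_pc x y t _ _ Ht P1 P2)|].
  rewrite <- hnorm_sq_convex_defect. apply Req_le. field. lra.
Qed.

Lemma paraconcave_PInf x y t a : 0 <= t < 1 -> f x = Fin a -> f y = PInf ->
  f (hadd (hscal t x) (hscal (1 - t) y)) = PInf.
Proof.
  intros Ht Ha Hb.
  destruct (f (hadd (hscal t x) (hscal (1 - t) y))) as [c|] eqn:Ec; [|reflexivity]. exfalso.
  set (z := hadd (hscal t x) (hscal (1 - t) y)) in *.
  set (r := a - hnorm x ^ 2 / (2 * lam)).
  (* an [s] large enough to contradict the finite value [c] at [z] *)
  set (s := (c - t * r - hnorm z ^ 2 / (2 * lam) + 1) / (1 - t)).
  assert (P1 : ere_le (Fin (r + hnorm x ^ 2 / (2 * lam))) (f x)) by (rewrite Ha; simpl; unfold r; lra).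
  assert (P2 : ere_le (Fin (s + hnorm y ^ 2 / (2 * lam))) (f y)) by (rewrite Hb; exact I).
  pose proof (f_pc x y t r s ltac:(lra) P1 P2) as P. cbv zeta in P. fold z in P.
  rewrite Ec in P. simpl in P.
  assert ((1 - t) * s = c - t * r - hnorm z ^ 2 / (2 * lam) + 1) by (unfold s; field; lra).
  lra.
Qed.

(* A point with [f = PInf] would propagate [PInf] along the segment to points arbitrarily
   close to [xbar], where [f] is finite by continuity. *)
Lemma paraconcave_finite y : f y = Fin (fval f y).
Proof.
  destruct f_cont as [fx [Hfx Hc]]. unfold fval.
  destruct (f y) as [r|] eqn:Ey; [reflexivity|]. exfalso.
  destruct (Hc 1 ltac:(lra)) as [d [Hd Hd2]].
  set (D := hnorm (hsub y xbar)). assert (HD : 0 <= D) by apply hnorm_ge0.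
  set (s := Rmin (1/2) (d / (2 * (D + 1)))).
  assert (Hs1 : s <= 1/2) by apply Rmin_l. assert (Hs2 : s <= d / (2 * (D + 1))) by apply Rmin_r.
  assert (Hs0 : 0 < s) by (apply Rmin_pos; [lra| apply Rdiv_lt_0_compat; lra]).
  pose proof (paraconcave_PInf xbar y (1 - s) fx ltac:(lra) Hfx Ey) as Hinf.
  destruct (Hd2 (hadd (hscal (1 - s) xbar) (hscal (1 - (1 - s)) y))) as [fy [Hfy _]].
  - replace (hsub (hadd (hscal (1 - s) xbar) (hscal (1 - (1 - s)) y)) xbar)
      with (hscal s (hsub y xbar)) by vec_eq.
    rewrite hnorm_scal, Rabs_right by lra. fold D.
    apply (Rle_lt_trans _ (d / (2 * (D + 1)) * D)); [apply Rmult_le_compat_r; lra|].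
    apply (Rmult_lt_reg_r (2 * (D + 1))); [lra|].
    replace (d / (2 * (D + 1)) * D * (2 * (D + 1))) with (d * D) by (field; lra). nra.
  - rewrite Hinf in Hfy. discriminate.
Qed.

Lemma semiconcave x y t : 0 <= t <= 1 ->
  t * fval f x + (1 - t) * fval f y - t * (1 - t) * hnorm (hsub x y) ^ 2 / (2 * lam)
   <= fval f (hadd (hscal t x) (hscal (1 - t) y)).
Proof.
  intro Ht. pose proof (paraconcave_Fin x y t _ _ Ht (paraconcave_finite x) (paraconcave_finite y)) as P.
  rewrite paraconcave_finite in P. exact P.
Qed.

Lemma prox_subdiff_fval x z : prox_subdiff f x z ->
  exists sigma delta, 0 < sigma /\ 0 < delta /\ forall y, hnorm (hsub y x) < delta ->
    fval f x + hinner z (hsub y x) - sigma / 2 * hnorm (hsub y x) ^ 2 <= fval f y.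
Proof.
  intros [fx [Hfx [sg [dl [Hsg [Hdl Hp]]]]]].
  exists sg, dl. split; [|split]; auto. intros y Hy. specialize (Hp y Hy).
  rewrite paraconcave_finite in Hp. unfold fval at 1. rewrite Hfx. exact Hp.
Qed.

(* A proximal subgradient of a semiconcave function is a global quadratic upper support:
   the local lower bound at [x - θ (y - x)] and semiconcavity on [x ± θ (y - x)] and on
   [[x, y]] combine into the inequality up to an error [O(θ)]. *)
Lemma prox_subdiff_upper x z : prox_subdiff f x z ->
  forall y, fval f y <= fval f x + hinner z (hsub y x) + hnorm (hsub y x) ^ 2 / (2 * lam).
Proof.
  intros Hp y.
  destruct (prox_subdiff_fval x z Hp) as [sg [dl [Hsg [Hdl Hb]]]].
  set (d := hsub y x). set (N := hnorm d). assert (HN : 0 <= N) by apply hnorm_ge0.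
  apply (Rle_of_le_add_small _ _ ((sg / 2 + / lam) * N ^ 2) (Rmin (1/2) (dl / (N + 1)))).
  { apply Rmin_pos; [lra|apply Rdiv_lt_0_compat; lra]. }
  intros th [Hth0 Hth1].
  assert (Ht1 : th < 1/2) by (eapply Rlt_le_trans; [exact Hth1|apply Rmin_l]).
  assert (Ht2 : th < dl / (N + 1)) by (eapply Rlt_le_trans; [exact Hth1|apply Rmin_r]).
  assert (HthN : th * N < dl).
  { apply (Rmult_lt_compat_r (N + 1)) in Ht2; [|lra].
    replace (dl / (N + 1) * (N + 1)) with dl in Ht2 by (field; lra). nra. }
  set (w := hadd x (hscal th d)). set (w' := hadd x (hscal (- th) d)).
  assert (B1 : fval f x - th * hinner z d - sg / 2 * (th * N) ^ 2 <= fval f w').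
  { pose proof (Hb w') as B. replace (hsub w' x) with (hscal (- th) d) in B by (unfold w'; vec_eq).
    rewrite hinner_scal_r, hnorm_scal, Rabs_left1 in B by lra. fold N in B.
    replace (- - th * N) with (th * N) in B by ring. specialize (B HthN). lra. }
  pose proof (semiconcave w w' (1/2) ltac:(lra)) as M.
  replace (hadd (hscal (1/2) w) (hscal (1 - 1/2) w')) with x in M by (unfold w, w'; vec_eq).
  replace (hsub w w') with (hscal (2 * th) d) in M by (unfold w, w'; vec_eq).
  rewrite hnorm_scal, Rabs_right in M by lra. fold N in M.
  pose proof (semiconcave y x th ltac:(lra)) as C.
  replace (hadd (hscal th y) (hscal (1 - th) x)) with w in C by (unfold w, d; vec_eq).
  fold d N in C.
  assert (Hli : 0 < / lam) by (apply Rinv_0_lt_compat; lra).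
  assert (E1 : forall u, u / (2 * lam) = u * / 2 * / lam) by (intro; field; lra).
  rewrite !E1 in *.
  assert (th * fval f y <= th * (fval f x + hinner z d + N ^ 2 * / 2 * / lam
                                 + th * ((sg / 2 + / lam) * N ^ 2))).
  { assert (0 <= th * th * (N * N) * / lam) by (apply Rmult_le_pos; [nra|lra]). nra. }
  apply (Rmult_le_reg_l th); lra.
Qed.

Section SecondOrderQuotient.
Hypothesis f_prox0 : prox_subdiff f xbar hzero.

Definition dq2 (t : R) (u : H) : R := (fval f (hadd xbar (hscal t u)) - fval f xbar) / (/ 2 * t ^ 2).

Lemma Delta2_eq_dq2 t u : Delta2 f xbar hzero t u = Fin (dq2 t u).
Proof.
  unfold Delta2, dq2. rewrite (paraconcave_finite xbar), (paraconcave_finite (hadd xbar (hscal t u))).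
  rewrite hinner_zero_l. do 2 f_equal. ring.
Qed.

Lemma dq2_scal t s u : 0 < t -> 0 < s -> dq2 t (hscal s u) = s ^ 2 * dq2 (t * s) u.
Proof. intros Ht Hs. unfold dq2. rewrite hscal_assoc. field. split; lra. Qed.

Lemma dq2_mul_eq t u : 0 < t -> dq2 t u * (/ 2 * t ^ 2) = fval f (hadd xbar (hscal t u)) - fval f xbar.
Proof. intro Ht. unfold dq2. field. lra. Qed.

Lemma dq2_le t u : 0 < t -> dq2 t u <= hnorm u ^ 2 / lam.
Proof.
  intro Ht. pose proof (prox_subdiff_upper xbar hzero f_prox0 (hadd xbar (hscal t u))) as S.
  replace (hsub (hadd xbar (hscal t u)) xbar) with (hscal t u) in S by vec_eq.
  rewrite hinner_zero_l, hnorm_scal, Rabs_right in S by lra.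
  apply (Rmult_le_reg_r (/ 2 * t ^ 2)); [apply Rmult_lt_0_compat; [lra | apply pow_lt; lra]|].
  rewrite dq2_mul_eq by exact Ht.
  replace (hnorm u ^ 2 / lam * (/ 2 * t ^ 2)) with ((t * hnorm u) ^ 2 / (2 * lam)) by (field; lra).
  lra.
Qed.

Lemma dq2_ge : exists sg dl, 0 < sg /\ 0 < dl /\
  forall t u, 0 < t -> t * hnorm u < dl -> - sg * hnorm u ^ 2 <= dq2 t u.
Proof.
  destruct (prox_subdiff_fval xbar hzero f_prox0) as [sg [dl [Hsg [Hdl B]]]].
  exists sg, dl. split; [|split]; auto. intros t u Ht Hu.
  specialize (B (hadd xbar (hscal t u))).
  replace (hsub (hadd xbar (hscal t u)) xbar) with (hscal t u) in B by vec_eq.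
  rewrite hinner_zero_l, hnorm_scal, Rabs_right in B by lra. specialize (B Hu).
  apply (Rmult_le_reg_r (/ 2 * t ^ 2)); [apply Rmult_lt_0_compat; [lra | apply pow_lt; lra]|].
  rewrite dq2_mul_eq by exact Ht.
  replace (- sg * hnorm u ^ 2 * (/ 2 * t ^ 2)) with (- (sg / 2 * (t * hnorm u) ^ 2)) by (field; lra).
  lra.
Qed.

Lemma dq2_semiconcave t u v θ : 0 < t -> 0 <= θ <= 1 ->
  θ * dq2 t u + (1 - θ) * dq2 t v - θ * (1 - θ) * hnorm (hsub u v) ^ 2 / lam
    <= dq2 t (hadd (hscal θ u) (hscal (1 - θ) v)).
Proof.
  intros Ht Hθ.
  pose proof (semiconcave (hadd xbar (hscal t u)) (hadd xbar (hscal t v)) θ Hθ) as S.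
  replace (hadd (hscal θ (hadd xbar (hscal t u))) (hscal (1 - θ) (hadd xbar (hscal t v))))
    with (hadd xbar (hscal t (hadd (hscal θ u) (hscal (1 - θ) v)))) in S by vec_eq.
  replace (hsub (hadd xbar (hscal t u)) (hadd xbar (hscal t v))) with (hscal t (hsub u v)) in S
    by vec_eq.
  rewrite hnorm_scal, Rabs_right in S by lra.
  apply (Rmult_le_reg_r (/ 2 * t ^ 2)); [apply Rmult_lt_0_compat; [lra | apply pow_lt; lra]|].
  rewrite dq2_mul_eq by exact Ht.
  replace ((θ * dq2 t u + (1 - θ) * dq2 t v - θ * (1 - θ) * hnorm (hsub u v) ^ 2 / lam) * (/ 2 * t ^ 2))
    with (θ * (dq2 t u * (/ 2 * t ^ 2)) + (1 - θ) * (dq2 t v * (/ 2 * t ^ 2))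
          - θ * (1 - θ) * (t * hnorm (hsub u v)) ^ 2 / (2 * lam)) by (field; lra).
  rewrite !dq2_mul_eq by exact Ht. lra.
Qed.

Lemma dq2_le_at_prox t h z : 0 < t ->
  prox_subdiff f (hadd xbar (hscal t h)) (hadd hzero (hscal t z)) ->
  forall w, dq2 t w <= dq2 t h + 2 * hinner z (hsub w h) + hnorm (hsub w h) ^ 2 / lam.
Proof.
  intros Ht Hp w.
  pose proof (prox_subdiff_upper _ _ Hp (hadd xbar (hscal t w))) as S.
  replace (hsub (hadd xbar (hscal t w)) (hadd xbar (hscal t h))) with (hscal t (hsub w h)) in S
    by vec_eq.
  rewrite hnorm_scal, Rabs_right, hadd_zero, hinner_scal, hinner_scal_r in S by lra.
  apply (Rmult_le_reg_r (/ 2 * t ^ 2)); [apply Rmult_lt_0_compat; [lra | apply pow_lt; lra]|].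
  replace ((dq2 t h + 2 * hinner z (hsub w h) + hnorm (hsub w h) ^ 2 / lam) * (/ 2 * t ^ 2))
    with (dq2 t h * (/ 2 * t ^ 2) + t * (t * hinner z (hsub w h))
          + (t * hnorm (hsub w h)) ^ 2 / (2 * lam)) by (field; lra).
  rewrite !dq2_mul_eq by exact Ht. lra.
Qed.

Section Density.
Hypothesis f_lsc : lsc f.

Lemma prox_points_near : exists d0, 0 < d0 /\ forall x0 rho, 0 < rho -> hnorm (hsub x0 xbar) + rho < d0 ->
  exists x z, hnorm (hsub x x0) <= rho / 2 /\ prox_subdiff f x z.
Proof.
  destruct (prox_subdiff_fval xbar hzero f_prox0) as [sg [dl [Hsg [Hdl B]]]].
  exists dl. split; [exact Hdl|]. intros x0 rho Hr Hx.
  set (m := fval f xbar - sg / 2 * dl ^ 2).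
  assert (Hm : forall y, hnorm (hsub y x0) <= rho -> m <= fval f y).
  { intros y Hy. assert (Hyx : hnorm (hsub y xbar) < dl)
      by (pose proof (hnorm_sub_triangle y x0 xbar); lra).
    specialize (B y Hyx). rewrite hinner_zero_l in B. unfold m.
    pose proof (hnorm_ge0 (hsub y xbar)).
    assert (hnorm (hsub y xbar) ^ 2 <= dl ^ 2) by (apply pow_incr; lra). nra. }
  assert (Hm0 : m <= fval f x0) by (apply Hm; rewrite hnorm_sub_self; lra).
  (* the weight [c0] makes [x0] a [c0 (rho/2)^2]-minimizer on the ball, as Borwein-Preiss needs *)
  set (eta := rho / 2). set (c0 := (fval f x0 - m + 1) / eta ^ 2).
  assert (He : 0 < eta) by (unfold eta; lra).
  assert (Hc0 : 0 < c0) by (apply Rdiv_lt_0_compat; [lra| apply pow_lt; lra]).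
  apply (borwein_preiss f x0 rho c0 eta m); auto using paraconcave_finite.
  - unfold c0. replace ((fval f x0 - m + 1) / eta ^ 2 * eta ^ 2) with (fval f x0 - m + 1)
      by (field; lra). lra.
  - unfold eta. lra.
Qed.

Lemma prox_points_rescaled h : exists tau, 0 < tau /\ forall t, 0 < t <= tau ->
  exists hn zn, hnorm (hsub hn h) <= t / 2 /\
    prox_subdiff f (hadd xbar (hscal t hn)) (hadd hzero (hscal t zn)).
Proof.
  destruct prox_points_near as [d0 [Hd0 PN]].
  set (A := hnorm h). assert (HA : 0 <= A) by apply hnorm_ge0.
  exists (Rmin (d0 / (2 * (A + 1))) (1/2)).
  split; [apply Rmin_pos; [apply Rdiv_lt_0_compat|]; lra|].
  intros t [Ht Htau].
  assert (Ht1 : t <= d0 / (2 * (A + 1))) by (eapply Rle_trans; [exact Htau | apply Rmin_l]).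
  assert (Ht2 : t <= 1/2) by (eapply Rle_trans; [exact Htau | apply Rmin_r]).
  destruct (PN (hadd xbar (hscal t h)) (t ^ 2)) as [x [z [Hx Hxz]]]; [apply pow_lt; lra| |].
  { replace (hsub (hadd xbar (hscal t h)) xbar) with (hscal t h) by vec_eq.
    rewrite hnorm_scal, Rabs_right by lra. fold A.
    assert (t * (A + 1) <= d0 / 2).
    { apply (Rmult_le_compat_r (A + 1)) in Ht1; [|lra].
      replace (d0 / (2 * (A + 1)) * (A + 1)) with (d0 / 2) in Ht1 by (field; lra). exact Ht1. }
    nra. }
  exists (hscal (/ t) (hsub x xbar)), (hscal (/ t) z). split.
  - replace (hsub (hscal (/ t) (hsub x xbar)) h) with (hscal (/ t) (hsub x (hadd xbar (hscal t h))))
      by (vec_eq; lra).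
    rewrite hnorm_scal, Rabs_right by (left; apply Rinv_0_lt_compat; lra).
    apply (Rmult_le_reg_l t); [lra|]. rewrite <- Rmult_assoc, Rinv_r by lra.
    replace (t * (t / 2)) with (t ^ 2 / 2) by field. lra.
  - replace (hadd xbar (hscal t (hscal (/ t) (hsub x xbar)))) with x by (vec_eq; lra).
    replace (hadd hzero (hscal t (hscal (/ t) z))) with z by (vec_eq; lra). exact Hxz.
Qed.

(* Testing the upper quadratic support at a proximal point with [w = hn - a zn] bounds the
   rescaled slope [zn], because [dq2] is bounded above near [0] and below on small balls. *)
Lemma prox_slope_bounded sg dl r t hn zn :
  (forall t u, 0 < t -> t * hnorm u < dl -> - sg * hnorm u ^ 2 <= dq2 t u) ->
  0 < sg -> 0 < t -> hnorm hn <= r -> t * (r + 1) < dl ->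
  prox_subdiff f (hadd xbar (hscal t hn)) (hadd hzero (hscal t zn)) ->
  hnorm zn <= (r ^ 2 / lam + sg * (r + 1) ^ 2) / Rmin lam 1 + 1.
Proof.
  intros Hlow Hsg Ht Hhn Htr Hp.
  set (kap := Rmin lam 1). set (K := r ^ 2 / lam + sg * (r + 1) ^ 2).
  assert (Hkap : 0 < kap) by (apply Rmin_pos; lra).
  assert (Hkl : kap <= lam) by apply Rmin_l. assert (Hk1 : kap <= 1) by apply Rmin_r.
  set (Z := hnorm zn). assert (HZ : 0 <= Z) by apply hnorm_ge0.
  set (a := kap / (1 + Z)).
  assert (Ha : 0 < a) by (apply Rdiv_lt_0_compat; lra).
  assert (HaZ : a * (1 + Z) = kap) by (unfold a; field; lra).
  set (w := hsub hn (hscal a zn)).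
  assert (Hw : hnorm w <= r + 1).
  { pose proof (hnorm_triangle hn (hopp (hscal a zn))) as T.
    rewrite hnorm_opp, hnorm_scal, Rabs_right in T by lra. fold Z in T. unfold w, hsub. nra. }
  assert (Ftw : t * hnorm w < dl) by (pose proof (hnorm_ge0 w); nra).
  pose proof (Hlow t w Ht Ftw) as L1.
  pose proof (dq2_le t hn Ht) as U1.
  pose proof (dq2_le_at_prox t hn zn Ht Hp w) as St.
  replace (hsub w hn) with (hscal (- a) zn) in St by (unfold w; vec_eq).
  rewrite hinner_scal_r, hnorm_scal, Rabs_left1, <- hnorm_mul_self in St by lra. fold Z in St.
  assert (hnorm hn ^ 2 / lam <= r ^ 2 / lam).
  { apply Rmult_le_compat_r; [left; apply Rinv_0_lt_compat; lra|].
    apply pow_incr. split; [apply hnorm_ge0 | exact Hhn]. }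
  assert (- sg * (r + 1) ^ 2 <= - sg * hnorm w ^ 2).
  { assert (hnorm w ^ 2 <= (r + 1) ^ 2) by (apply pow_incr; split; [apply hnorm_ge0 | exact Hw]).
    nra. }
  assert (Q : (- - a * Z) ^ 2 / lam <= a * (Z * Z)).
  { replace ((- - a * Z) ^ 2 / lam) with (a * (Z * Z) * (a / lam)) by (field; lra).
    assert (a / lam <= 1).
    { apply (Rmult_le_reg_r lam); [lra|]. replace (a / lam * lam) with a by (field; lra). nra. }
    assert (0 <= a * (Z * Z)) by (apply Rmult_le_pos; nra). nra. }
  assert (M : a * (Z * Z) <= K) by (unfold K; lra).
  assert (kap * (Z - 1) <= a * (Z * Z)) by nra.
  apply (Rmult_le_reg_l kap); [lra|]. fold K. replace (kap * (K / kap + 1)) with (K + kap) by (field; lra).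
  lra.
Qed.

(* Rescaled proximal points near [xbar + t h] have bounded slopes, hence a weakly convergent
   subsequence. *)
Lemma D2M_dom_full h : exists z, D2M f xbar hzero h z.
Proof.
  destruct dq2_ge as [sg [dl [Hsg [Hdl Hlow]]]].
  destruct (prox_points_rescaled h) as [tau [Htau PR]].
  set (A := hnorm h). assert (HA : 0 <= A) by apply hnorm_ge0.
  set (tau' := Rmin (Rmin tau 1) (dl / (2 * (A + 2)))).
  assert (Htau'0 : 0 < tau') by (apply Rmin_pos; [apply Rmin_pos | apply Rdiv_lt_0_compat]; lra).
  assert (Htau'1 : tau' <= tau) by (eapply Rle_trans; [apply Rmin_l | apply Rmin_l]).
  assert (Htau'2 : tau' <= 1) by (eapply Rle_trans; [apply Rmin_l | apply Rmin_r]).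
  assert (Htau'3 : tau' * (A + 2) < dl).
  { apply (Rle_lt_trans _ (dl / (2 * (A + 2)) * (A + 2))); [apply Rmult_le_compat_r, Rmin_r; lra|].
    replace (dl / (2 * (A + 2)) * (A + 2)) with (dl / 2) by (field; lra). lra. }
  set (t := fun n => tau' * inv_succ n).
  assert (Ht : forall n, 0 < t n) by (intro n; apply Rmult_lt_0_compat; [lra | apply inv_succ_pos]).
  assert (Ht1 : forall n, t n <= tau').
  { intro n. pose proof (inv_succ_le1 n). pose proof (inv_succ_pos n). unfold t. nra. }
  assert (Htc : Un_cv t 0) by (replace 0 with (tau' * 0) by ring; apply Un_cv_scal, inv_succ_cv0).
  destruct (choice (fun n (p : H * H) => hnorm (hsub (fst p) h) <= t n / 2 /\
      prox_subdiff f (hadd xbar (hscal (t n) (fst p))) (hadd hzero (hscal (t n) (snd p)))))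
    as [pts Hpts].
  { intro n. destruct (PR (t n)) as [hn [zn Hn]]; [specialize (Ht1 n); split; [apply Ht | lra]|].
    exists (hn, zn). exact Hn. }
  set (hn := fun n => fst (pts n)). set (zn := fun n => snd (pts n)).
  assert (Hbd : forall n, hnorm (zn n) <= ((A + 1) ^ 2 / lam + sg * (A + 1 + 1) ^ 2) / Rmin lam 1 + 1).
  { intro n. destruct (Hpts n) as [Hh Hp]. specialize (Ht n). specialize (Ht1 n).
    apply (prox_slope_bounded sg dl (A + 1) (t n) (hn n)); auto.
    - pose proof (hnorm_sub_le (fst (pts n)) h). unfold hn, A. lra.
    - replace (A + 1 + 1) with (A + 2) by ring.
      apply (Rle_lt_trans _ (tau' * (A + 2))); [apply Rmult_le_compat_r|]; lra. }
  destruct (weak_cv_reindex_of_bounded zn _ Hbd) as [g [Hg [w Hw]]].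
  exists w, (fun n => t (g n)), (fun n => hn (g n)), (fun n => zn (g n)).
  split; [intro; apply Ht|]. split; [apply Un_cv_reindex; auto|].
  split; [|split; [exact Hw | intro n; apply (Hpts (g n))]].
  apply norm_cv_reindex; [|exact Hg]. apply norm_cv_of_eventually. intros eps He.
  destruct (Un_cv_eventually t 0 Htc eps He) as [N HN]. exists N. intros n Hn.
  specialize (HN n Hn). destruct (Hpts n) as [Hh _]. specialize (Ht n). unfold hn. lra.
Qed.


(** * The Mosco limit and the optimality conditions *)

Section MoscoLimit.
Variable phi : H -> ereal.
Hypothesis phi_mosco : forall t : nat -> R, (forall n, 0 < t n) -> Un_cv t 0 ->
  mosco_cv (fun n => epi (Delta2 f xbar hzero (t n))) (epi phi).

Lemma epi_Delta2 t x r : epi (Delta2 f xbar hzero t) x r <-> dq2 t x <= r.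
Proof. unfold epi. rewrite Delta2_eq_dq2. simpl. tauto. Qed.

Lemma mosco_lim_le t xn rn x r : (forall n, 0 < t n) -> Un_cv t 0 ->
  norm_cv xn x -> Un_cv rn r -> (forall n, dq2 (t n) (xn n) <= rn n) -> ere_le (phi x) (Fin r).
Proof.
  intros Ht Ht0 Hx Hr Hle. destruct (phi_mosco t Ht Ht0) as [C1 _].
  apply (proj2 (C1 x r)). exists xn, rn. split; [|split]; auto.
  intro n. apply epi_Delta2, Hle.
Qed.

Lemma mosco_recovery t x r : (forall n, 0 < t n) -> Un_cv t 0 -> ere_le (phi x) (Fin r) ->
  exists xn rn, norm_cv xn x /\ Un_cv rn r /\ forall n, dq2 (t n) (xn n) <= rn n.
Proof.
  intros Ht Ht0 Hle. destruct (phi_mosco t Ht Ht0) as [C1 _].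
  destruct (proj1 (C1 x r) Hle) as [xn [rn [A [B C]]]]. exists xn, rn. split; [|split]; auto.
  intro n. apply epi_Delta2, A.
Qed.

Lemma phi_finite h : phi h = Fin (fval phi h).
Proof.
  pose proof (mosco_lim_le inv_succ (fun _ => h) (fun _ => hnorm h ^ 2 / lam) h _ inv_succ_pos
                inv_succ_cv0 (norm_cv_const h) (Un_cv_const _)
                (fun n => dq2_le (inv_succ n) h (inv_succ_pos n))) as P.
  unfold fval. destruct (phi h); [reflexivity | contradiction].
Qed.

Lemma phi_le_fval h : ere_le (phi h) (Fin (fval phi h)).
Proof. rewrite phi_finite. simpl. lra. Qed.

Section Scales.
Variable t : nat -> R.
Hypotheses (t_pos : forall n, 0 < t n) (t_cv0 : Un_cv t 0).

Lemma dq2_liminf hn h eps : norm_cv hn h -> 0 < eps ->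
  eventually (fun n => fval phi h - eps <= dq2 (t n) (hn n)).
Proof.
  intros hn_cv He. apply NNPP. intro Hn. destruct (not_eventually _ Hn) as [g Hg].
  assert (Hg1 : forall N, (N <= g N)%nat) by (intro N; apply Hg).
  pose proof (mosco_lim_le (fun n => t (g n)) (fun n => hn (g n)) (fun _ => fval phi h - eps) h _
    (fun n => t_pos (g n)) (Un_cv_reindex t 0 g t_cv0 Hg1) (norm_cv_reindex hn h g hn_cv Hg1)
    (Un_cv_const _)) as P.
  assert (P' : ere_le (phi h) (Fin (fval phi h - eps))).
  { apply P. intro n. destruct (Hg n) as [_ Hn']. lra. }
  rewrite phi_finite in P'. simpl in P'. lra.
Qed.

(* With a recovery sequence [wn] for [h], the midpoint semiconcavity of [dq2] between [hn] and
   [vn = 2 wn - hn] bounds [dq2 (t n) (hn n)] above, using the liminf bound along [vn]. *)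
Lemma dq2_limsup hn h eps : norm_cv hn h -> 0 < eps ->
  eventually (fun n => dq2 (t n) (hn n) <= fval phi h + eps).
Proof.
  intros hn_cv He. set (p := fval phi h).
  destruct (mosco_recovery t h p t_pos t_cv0 (phi_le_fval h)) as [wn [rn [Hw [Hr Hle]]]].
  set (vn := fun n => hadd (hscal 2 (wn n)) (hscal (-1) (hn n))).
  assert (Hv : norm_cv vn (hadd (hscal 2 h) (hscal (-1) h))) by (apply norm_cv_lin; auto).
  replace (hadd (hscal 2 h) (hscal (-1) h)) with h in Hv by vec_eq.
  assert (Hd : norm_cv (fun n => hadd (hscal 1 (hn n)) (hscal (-1) (wn n))) (hadd (hscal 1 h) (hscal (-1) h)))
    by (apply norm_cv_lin; auto).
  replace (hadd (hscal 1 h) (hscal (-1) h)) with (@hzero H) in Hd by vec_eq.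
  set (e1 := Rmin 1 (sqrt (lam * eps / 16))).
  assert (Hle16 : 0 < lam * eps / 16) by (apply Rdiv_lt_0_compat; [nra | lra]).
  assert (He1 : 0 < e1) by (apply Rmin_pos; [lra | apply sqrt_lt_R0; exact Hle16]).
  assert (He1b : e1 * e1 <= lam * eps / 16).
  { assert (e1 <= sqrt (lam * eps / 16)) by apply Rmin_r.
    rewrite <- (sqrt_sqrt (lam * eps / 16)) by lra. nra. }
  destruct (eventually_and _ _ (dq2_liminf vn h (eps / 4) Hv ltac:(lra))
             (eventually_and _ _ (Un_cv_eventually rn p Hr (eps / 8) ltac:(lra))
                (norm_cv_eventually _ _ Hd e1 He1))) as [N HN].
  exists N. intros n Hn. destruct (HN n Hn) as [A [B C]].
  pose proof (dq2_semiconcave (t n) (hn n) (vn n) (1/2) (t_pos n) ltac:(lra)) as M.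
  replace (hadd (hscal (1 / 2) (hn n)) (hscal (1 - 1 / 2) (vn n))) with (wn n) in M by (unfold vn; vec_eq).
  replace (hsub (hn n) (vn n)) with (hscal 2 (hsub (hn n) (wn n))) in M by (unfold vn; vec_eq).
  replace (hsub (hadd (hscal 1 (hn n)) (hscal (-1) (wn n))) hzero) with (hsub (hn n) (wn n)) in C
    by vec_eq.
  rewrite hnorm_scal, Rabs_right in M by lra.
  specialize (Hle n).
  assert ((2 * hnorm (hsub (hn n) (wn n))) ^ 2 / lam <= eps / 4).
  { pose proof (hnorm_ge0 (hsub (hn n) (wn n))).
    apply (Rmult_le_reg_r lam); [lra|].
    replace ((2 * hnorm (hsub (hn n) (wn n))) ^ 2 / lam * lam)
      with (4 * (hnorm (hsub (hn n) (wn n)) * hnorm (hsub (hn n) (wn n)))) by (field; lra).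
    nra. }
  unfold p in *. lra.
Qed.

Lemma dq2_cv hn h : norm_cv hn h -> Un_cv (fun n => dq2 (t n) (hn n)) (fval phi h).
Proof.
  intro Hh. apply Un_cv_of_eventually. intros eps He.
  destruct (eventually_and _ _ (dq2_liminf hn h (eps / 2) Hh ltac:(lra))
              (dq2_limsup hn h (eps / 2) Hh ltac:(lra))) as [N HN].
  exists N. intros n Hn. destruct (HN n Hn). lra.
Qed.

End Scales.

Lemma sec_subderiv_ge_iff h beta : sec_subderiv_ge f xbar hzero h beta <-> beta <= fval phi h.
Proof.
  split.
  - intro Hs. apply Rle_of_forall_lt. intros r Hr.
    destruct (Hs r Hr) as [d [Hd Hd2]].
    destruct (mosco_recovery inv_succ h _ inv_succ_pos inv_succ_cv0 (phi_le_fval h))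
      as [wn [rn [Hw [Hr' Hle]]]].
    apply (Un_cv_ge_of_eventually rn _ _ Hr').
    destruct (eventually_and _ _ (Un_cv_eventually _ 0 inv_succ_cv0 d Hd) (norm_cv_eventually _ _ Hw d Hd))
      as [N HN].
    exists N. intros n Hn. destruct (HN n Hn) as [A B].
    specialize (Hd2 (inv_succ n) (wn n) ltac:(pose proof (inv_succ_pos n); lra) B).
    rewrite Delta2_eq_dq2 in Hd2. simpl in Hd2. specialize (Hle n). lra.
  - intros Hb r Hr. apply NNPP. intro Hn.
    assert (Hall : forall n, exists p : R * H, 0 < fst p < inv_succ n /\
                     hnorm (hsub (snd p) h) < inv_succ n /\ dq2 (fst p) (snd p) < r).
    { intro n. apply NNPP. intro Hc. apply Hn. exists (inv_succ n). split; [apply inv_succ_pos|].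
      intros t h' Ht Hh'. rewrite Delta2_eq_dq2. simpl.
      apply Rnot_lt_le. intro Hlt. apply Hc. exists (t, h'). simpl. auto. }
    destruct (choice _ Hall) as [g Hg].
    assert (Htc : Un_cv (fun n => fst (g n)) 0).
    { apply (Un_cv_squeeze0 _ inv_succ (fun _ => 0)); [|apply inv_succ_cv0 | apply Un_cv_const].
      intro n. destruct (Hg n) as [A _]. lra. }
    assert (Hhc : norm_cv (fun n => snd (g n)) h).
    { apply (Un_cv_squeeze0 _ inv_succ (fun _ => 0)); [|apply inv_succ_cv0 | apply Un_cv_const].
      intro n. destruct (Hg n) as [_ [A _]]. pose proof (hnorm_ge0 (hsub (snd (g n)) h)). lra. }
    destruct (dq2_liminf (fun n => fst (g n)) (fun n => proj1 (proj1 (Hg n))) Htc _ _ (beta - r)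
                Hhc ltac:(lra)) as [N HN].
    specialize (HN N (le_n N)). destruct (Hg N) as [_ [_ C]]. lra.
Qed.

Section Tangent.
Variables (t : nat -> R) (hn zn : nat -> H) (h z : H).
Hypotheses (t_pos : forall n, 0 < t n) (t_cv0 : Un_cv t 0) (hn_cv : norm_cv hn h)
  (zn_weak : weak_cv zn z)
  (hn_prox : forall n, prox_subdiff f (hadd xbar (hscal (t n) (hn n))) (hadd hzero (hscal (t n) (zn n)))).

Let dq2_le_at n := dq2_le_at_prox (t n) (hn n) (zn n) (t_pos n) (hn_prox n).

Lemma hnorm_sub_sq_cv0 : Un_cv (fun n => hnorm (hsub (hn n) h) ^ 2 / lam) 0.
Proof.
  replace 0 with (hnorm (@hzero H) ^ 2 * / lam) by (rewrite hnorm_zero; ring). unfold Rdiv. apply CV_mult; [|apply Un_cv_const].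
  apply (hnorm_sq_cv (fun n => hsub (hn n) h) hzero).
  apply norm_cv_of_eventually. intros eps He. destruct (norm_cv_eventually _ _ hn_cv eps He) as [N HN].
  exists N. intros n Hn. replace (hsub (hsub (hn n) h) hzero) with (hsub (hn n) h) by vec_eq. auto.
Qed.

(* [hinner (zn n) (hn n - h)] is squeezed between two differences of [dq2] at points converging
   to [h], which share the limit [fval phi h]; weak convergence handles the remaining term. *)
Lemma tangent_hinner_cv : Un_cv (fun n => hinner (zn n) (hn n)) (hinner z h).
Proof.
  set (p := fval phi h).
  pose proof (dq2_cv t t_pos t_cv0 hn h hn_cv) as Cb.
  pose proof (dq2_cv t t_pos t_cv0 (fun _ => h) h (norm_cv_const h)) as Ch.
  assert (C2 : Un_cv (fun n => dq2 (t n) (hsub (hscal 2 (hn n)) h)) p).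
  { apply (dq2_cv t t_pos t_cv0).
    replace h with (hadd (hscal 2 h) (hscal (-1) h)) at 2 by vec_eq.
    apply (Un_cv_ext (fun n => hnorm (hsub (hadd (hscal 2 (hn n)) (hscal (-1) h)) (hadd (hscal 2 h) (hscal (-1) h))))).
    { intro n. f_equal. f_equal; vec_eq. }
    apply (norm_cv_lin hn (fun _ => h)); [exact hn_cv | apply norm_cv_const]. }
  assert (Cc0 : Un_cv (fun n => hinner (zn n) (hsub (hn n) h)) 0).
  { apply (Un_cv_squeeze0 _
      (fun n => (dq2 (t n) (hn n) - dq2 (t n) h + hnorm (hsub (hn n) h) ^ 2 / lam) / 2)
      (fun n => (dq2 (t n) (hsub (hscal 2 (hn n)) h) - dq2 (t n) (hn n)
                 - hnorm (hsub (hn n) h) ^ 2 / lam) / 2)).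
    - intro n. split.
      + pose proof (dq2_le_at n (hsub (hscal 2 (hn n)) h)) as A.
        replace (hsub (hsub (hscal 2 (hn n)) h) (hn n)) with (hsub (hn n) h) in A by vec_eq. lra.
      + pose proof (dq2_le_at n h) as A.
        replace (hsub h (hn n)) with (hscal (-1) (hsub (hn n) h)) in A by vec_eq.
        rewrite hinner_scal_r, hnorm_scal, Rabs_left1 in A by lra.
        replace (- -1 * hnorm (hsub (hn n) h)) with (hnorm (hsub (hn n) h)) in A by ring. lra.
    - replace 0 with ((p - p + 0) / 2) by field. unfold Rdiv. apply CV_mult; [|apply Un_cv_const].
      apply CV_plus; [apply CV_minus|]; auto. apply hnorm_sub_sq_cv0.
    - replace 0 with ((p - p - 0) / 2) by field. unfold Rdiv. apply CV_mult; [|apply Un_cv_const].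
      apply CV_minus; [apply CV_minus|]; auto. apply hnorm_sub_sq_cv0. }
  apply (Un_cv_ext (fun n => hinner (zn n) h + hinner (zn n) (hsub (hn n) h))).
  { intro n. unfold hsub. autorewrite with hinner. ring. }
  replace (hinner z h) with (hinner z h + 0) by ring. apply CV_plus; [apply zn_weak | exact Cc0].
Qed.

Lemma tangent_scaled_le s : 0 < s ->
  s ^ 2 * fval phi h <= fval phi h + 2 * (s - 1) * hinner z h + (s - 1) ^ 2 * (hnorm h ^ 2 / lam).
Proof.
  intro Hs.
  apply (@Rle_cv_lim (fun n => dq2 (t n) (hscal s (hn n)))
           (fun n => dq2 (t n) (hn n) + 2 * (s - 1) * hinner (zn n) (hn n)
                     + (s - 1) ^ 2 * (hnorm (hn n) ^ 2 / lam))).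
  - intro n. pose proof (dq2_le_at n (hscal s (hn n))) as A.
    replace (hsub (hscal s (hn n)) (hn n)) with (hscal (s - 1) (hn n)) in A by vec_eq.
    rewrite hinner_scal_r, hnorm_scal, Rpow_mult_distr, pow2_abs in A. lra.
  - apply (Un_cv_ext (fun n => s ^ 2 * dq2 (t n * s) (hn n))).
    { intro n. symmetry. apply dq2_scal; auto. }
    apply Un_cv_scal. apply dq2_cv; [intro n; apply Rmult_lt_0_compat; auto| |exact hn_cv].
    replace 0 with (0 * s) by ring. apply CV_mult; [exact t_cv0 | apply Un_cv_const].
  - apply CV_plus; [apply CV_plus|].
    + apply dq2_cv; auto.
    + apply Un_cv_scal, tangent_hinner_cv.
    + apply Un_cv_scal. unfold Rdiv. apply CV_mult; [apply hnorm_sq_cv, hn_cv | apply Un_cv_const].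
Qed.

End Tangent.

Lemma D2M_hinner_eq h z : D2M f xbar hzero h z -> hinner z h = fval phi h.
Proof.
  intros [t [hn [zn [Ht [Ht0 [Hh [Hz Hp]]]]]]].
  apply (eq_of_scaled_le _ _ (hnorm h ^ 2 / lam)). intros s Hs.
  exact (tangent_scaled_le t hn zn h z Ht Ht0 Hh Hz Hp s Hs).
Qed.

Definition phi_ge_on_sphere (beta : R) : Prop := forall h, unit_sphere h -> beta <= fval phi h.

Lemma SOC_first_iff : SOC_first f xbar <-> exists beta, 0 < beta /\ phi_ge_on_sphere beta.
Proof.
  split; intros [b [Hb Hall]]; exists b; split; auto; intros h Hh; apply sec_subderiv_ge_iff; auto.
Qed.

Lemma SOC_second_iff : SOC_second f xbar <-> exists beta, 0 < beta /\ phi_ge_on_sphere beta.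
Proof.
  split; intros [b [Hb Hall]]; exists b; split; auto.
  - intros h Hh. destruct (Hall h (D2M_dom_full h) Hh) as [z [Hz Hzh]].
    rewrite <- (D2M_hinner_eq h z Hz). exact Hzh.
  - intros h [z Hz] Hh. exists z. split; [exact Hz|]. rewrite (D2M_hinner_eq h z Hz). auto.
Qed.

Section ThirdKind.
Hypothesis proj_full : forall b : H, exists a : H, N_M f xbar hzero a b.

Lemma d2M_hinner_le h z : d2M f xbar hzero h z -> hinner z h <= fval phi h.
Proof.
  intro Hz. destruct (D2M_dom_full h) as [z0 Hz0]. specialize (Hz h z0 Hz0).
  rewrite hinner_opp_l, (hinner_sym h z0), (D2M_hinner_eq h z0 Hz0) in Hz. lra.
Qed.

(* [proj_full] gives [a] with [(a, h)] in [N_M]; testing both [(a, h)] and [(z, - h)] against a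
   tangent pair over [a + z] forces [a = - z]. *)
Lemma d2M_hinner_ge h z : d2M f xbar hzero h z -> fval phi h <= hinner z h.
Proof.
  intro Hz. destruct (proj_full h) as [a Ha].
  assert (Ez : a = hopp z).
  { destruct (D2M_dom_full (hadd a z)) as [z1 Hz1].
    pose proof (Ha _ _ Hz1) as A. pose proof (Hz _ _ Hz1) as B. rewrite hinner_opp_l in B.
    assert (hinner (hadd a z) (hadd a z) <= 0).
    { rewrite hinner_add_r, (hinner_sym (hadd a z) a), (hinner_sym (hadd a z) z). lra. }
    pose proof (hinner_pos (hadd a z)).
    assert (Z : hadd a z = hzero) by (apply hinner_def; lra).
    replace a with (hadd (hadd a z) (hopp z)) by vec_eq. rewrite Z, hadd_zero. reflexivity. }
  subst a. destruct (D2M_dom_full h) as [z0 Hz0]. specialize (Ha h z0 Hz0).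
  rewrite hinner_opp_l, (hinner_sym h z0), (D2M_hinner_eq h z0 Hz0) in Ha. lra.
Qed.

Lemma SOC_third_iff : SOC_third f xbar <-> exists beta, 0 < beta /\ phi_ge_on_sphere beta.
Proof.
  split; intros [b [Hb Hall]]; exists b; split; auto.
  - intros h Hh. destruct (proj_full (hopp h)) as [z Hz].
    pose proof (Hall h z Hh (ex_intro _ z Hz) Hz). pose proof (d2M_hinner_le h z Hz). lra.
  - intros h z Hh _ Hz. pose proof (Hall h Hh). pose proof (d2M_hinner_ge h z Hz). lra.
Qed.

Lemma SOC_equiv : (SOC_first f xbar <-> SOC_second f xbar) /\ (SOC_second f xbar <-> SOC_third f xbar).
Proof. rewrite SOC_first_iff, SOC_second_iff, SOC_third_iff. tauto. Qed.

End ThirdKind.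

End MoscoLimit.
End Density.
End SecondOrderQuotient.
End Paraconcave.

Theorem theorem4p3 (H : HilbertSpace) (f : H -> ereal) (xbar : H) :
  proper f -> lsc f -> paraconcave f ->
  in_dom f xbar ->
  prox_subdiff f xbar hzero ->
  continuous_at f xbar ->
  twice_epi_diff_mosco f xbar hzero ->
  (exists a b, qri2 (N_M f xbar hzero) a b) ->
  (forall b : H, exists a : H, N_M f xbar hzero a b) ->
  (SOC_first f xbar <-> SOC_second f xbar) /\
  (SOC_second f xbar <-> SOC_third f xbar).
Proof.
  intros _ f_lsc [lam [lam_pos f_pc]] _ f_prox0 f_cont [phi [_ phi_mosco]] _ proj_full.
  exact (SOC_equiv f lam xbar lam_pos f_pc f_cont f_prox0 f_lsc phi phi_mosco proj_full).
Qed.
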